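(* Let $d>2$, $\beta>0$, $\lambda>0$, $\mu\in\mathbb R$, and let $r_\kappa$ be as defined in the context. Then: (a) $r_\kappa$ converges as $\kappa\to\infty$ to some $r_*\in(0,1)$ if and only if $\beta^d\mu<\zeta(d)\lambda$; in that case $r_*$ is the unique solution of $$\frac{\mu}{\lambda}=\frac{\log r_*}{\beta\lambda}+\frac{1}{\beta^d}\int_{[0,\infty)^d}\frac{r_*\,dp}{e^{|p|_1}-r_*}.$$ (b) $\kappa^d(1-r_\kappa)\to\beta^d\lambda/(\beta^d\mu-\zeta(d)\lambda)$ (and hence $r_\kappa\to1$) if and only if $\beta^d\mu>\zeta(d)\lambda$. (c) $r_\kappa\to1$ and $\kappa^d(1-r_\kappa)\to+\infty$ if and only if $\beta^d\mu=\zeta(d)\lambda$.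
   Context: $h_\kappa=\frac12\sum_{j=1}^d\big(-\partial^2/\partial x_j^2+x_j^2/\kappa^2-1/\kappa\big)$ on $L^2(\mathbb R^d)$ (spectrum $\{|s|_1/\kappa: s\in\mathbb Z_+^d\}$, $|s|_1=\sum_js_j$), $G_\kappa(\beta)=e^{-\beta h_\kappa}$. For $\kappa\ge1$, $(r_\kappa,s_\kappa)$ is the unique solution with $r_\kappa\in(0,1)$ of the system $r=\exp(\beta\mu-\beta\lambda s/\kappa^d)$, $s=\mathrm{Tr}[rG_\kappa(\beta)(1-rG_\kappa(\beta))^{-1}]$; equivalently $\kappa^{-d}\mathrm{Tr}[r_\kappa G_\kappa(\beta)(1-r_\kappa G_\kappa(\beta))^{-1}]=(\beta\mu-\log r_\kappa)/(\beta\lambda)$. $\zeta$ is the Riemann zeta function; $|p|_1=\sum_jp_j$. *)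

From Stdlib Require Import Reals Lra.
Open Scope R_scope.

Fixpoint natsum (f : nat -> nat) (n : nat) : nat :=
  match n with
  | O => f O
  | S m => (natsum f m + f (S m))%nat
  end.

(* deg d n = #{ s in Z_+^d : |s|_1 = n } : the multiplicity of the
   eigenvalue n/kappa of h_kappa on L^2(R^d). *)
Fixpoint deg (d n : nat) : nat :=
  match d with
  | O => match n with O => 1%nat | S _ => 0%nat end
  | S d' => natsum (fun k => deg d' (n - k)) n
  end.

(* Tr[ r G_kappa(beta) (1 - r G_kappa(beta))^{-1} ] = s : the trace computed
   as the sum over the spectrum {|s|_1/kappa : s in Z_+^d} of h_kappa,
   counted with multiplicity (grouped by the value n = |s|_1). *)
Definition TraceVal (d : nat) (beta kappa r s : R) : Prop :=
  infinite_sum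
    (fun n => INR (deg d n) *
       (r * exp (- beta * INR n / kappa) / (1 - r * exp (- beta * INR n / kappa))))
    s.

Definition IsRkappa (d : nat) (beta lambda mu : R) (r : R -> R) : Prop :=
  forall kappa, 1 <= kappa ->
    0 < r kappa < 1 /\
    exists s, TraceVal d beta kappa (r kappa) s /\
      r kappa = exp (beta * mu - beta * lambda * s / kappa ^ d).

Definition ZetaVal (d : nat) (z : R) : Prop :=
  infinite_sum (fun k => / (INR (S k)) ^ d) z.

Definition ImproperInt0 (G : R -> R) (l : R) : Prop :=
  exists pr : (forall T, Riemann_integrable G 0 T),
    forall eps, 0 < eps -> exists M, forall T, M <= T ->
      Rabs (RiemannInt (pr T) - l) < eps.

(* OrthantInt d F l : the (iterated, Tonelli) integral over [0,oo)^d of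
   p |-> F(|p|_1) equals l. *)
Fixpoint OrthantInt (d : nat) (F : R -> R) (l : R) : Prop :=
  match d with
  | O => l = F 0
  | S d' => exists G : R -> R,
      (forall x, 0 <= x -> OrthantInt d' (fun t => F (x + t)) (G x)) /\
      ImproperInt0 G l
  end.

Definition cv_at_infty (f : R -> R) (l : R) : Prop :=
  forall eps, 0 < eps -> exists M, forall kappa, M <= kappa -> Rabs (f kappa - l) < eps.

Definition to_plus_infty (f : R -> R) : Prop :=
  forall A, exists M, forall kappa, M <= kappa -> A < f kappa.

Definition LimitEq (d : nat) (beta lambda mu r : R) : Prop :=
  exists I, OrthantInt d (fun t => r / (exp t - r)) I /\
    mu / lambda = ln r / (beta * lambda) + I / beta ^ d.

From Stdlib Require Import Reals Ranalysis5 Lra Lia ClassicalEpsilon FunctionalExtensionality.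
Open Scope R_scope.

(* Write c = mu/lambda, Z = zeta(d)/beta^d,
   Li_d(z) = sum_{k>=1} z^k/k^d (the polylogarithm) and
       F(t) = ln t/(beta lambda) + Li_d(t)/beta^d,
   a strictly increasing continuous function on (0,1) with supremum Z.
   1. The degeneracies deg d n have generating function (1-z)^{-d}; expanding
      every term of the trace into a geometric series and exchanging the two
      summations (Tonelli for nonnegative double series) gives the closed form
      s = sum_{i>=1} r^i (1 - e^{-beta i/kappa})^{-d}.
   2. Elementary two-sided bounds on (1-e^{-x})^{-d} around x^{-d} then give,
      for d >= 3 and kappa >= 1,
        |s/kappa^d - r/(kappa^d(1-r)) - Li_d(r)/beta^d| <= C/kappa,
      and with ln r = beta mu - beta lambda s/kappa^d the key estimate
        |c - F(r_kappa) - A_kappa| <= C/kappa,  A_kappa = r_kappa/(kappa^d(1-r_kappa)).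
   3. From the key estimate: if c < Z, r_kappa tends to the root of F = c; if
      c >= Z, r_kappa -> 1 and A_kappa -> c - Z, so that
      kappa^d(1-r_kappa) = r_kappa/A_kappa tends to 1/(c-Z) or to +infinity.
   4. Differentiating x |-> Li_{m+1}(y e^{-x}) shows that the orthant integral of
      y/(e^{|p|_1}-y) equals Li_d(y), so the limit equation of the paper is F(t) = c. *)

Lemma psum_nonneg (a : nat -> R) n : (forall i, 0 <= a i) -> 0 <= sum_f_R0 a n.
Proof. intro H; induction n; simpl; [apply H| specialize (H (S n)); lra]. Qed.

Lemma psum_le (a b : nat -> R) n : (forall i, a i <= b i) -> sum_f_R0 a n <= sum_f_R0 b n.
Proof. intro H; induction n; simpl; [apply H| specialize (H (S n)); lra]. Qed.

Lemma isum_le_lim (a : nat -> R) l n : (forall i, 0 <= a i) -> infinite_sum a l ->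
  sum_f_R0 a n <= l.
Proof. intros H1 H2. apply sum_incr; auto. Qed.

Lemma isum_nonneg (a : nat -> R) l : (forall i, 0 <= a i) -> infinite_sum a l -> 0 <= l.
Proof.
  intros H1 H2. apply Rle_trans with (sum_f_R0 a 0); [apply psum_nonneg; auto|].
  apply isum_le_lim; auto.
Qed.

Lemma cv_const c : Un_cv (fun _ => c) c.
Proof. intros e He; exists 0%nat; intros; unfold Rdist; rewrite Rminus_diag, Rabs_R0; auto. Qed.

Lemma cv_le_bound u l B : Un_cv u l -> (forall n, u n <= B) -> l <= B.
Proof. intros H1 H2. apply Rle_cv_lim with u (fun _ => B); auto. apply cv_const. Qed.

Lemma isum_bounded (a : nat -> R) B : (forall i, 0 <= a i) ->
  (forall n, sum_f_R0 a n <= B) -> exists l, infinite_sum a l /\ l <= B.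
Proof.
  intros H1 H2.
  assert (Hg : Un_growing (sum_f_R0 a)).
  { intro n. simpl. specialize (H1 (S n)). lra. }
  assert (Hub : has_ub (sum_f_R0 a)).
  { exists B. intros x [n ->]. apply H2. }
  destruct (growing_cv _ Hg Hub) as [l Hl].
  exists l; split; [exact Hl|]. apply cv_le_bound with (sum_f_R0 a); auto.
Qed.

Lemma isum_le (a b : nat -> R) la lb : (forall i, a i <= b i) -> infinite_sum a la ->
  infinite_sum b lb -> la <= lb.
Proof.
  intros H Ha Hb. apply Rle_cv_lim with (sum_f_R0 a) (sum_f_R0 b); auto.
  intro; apply psum_le; auto.
Qed.

Lemma isum_comp (a b : nat -> R) lb : (forall i, 0 <= a i <= b i) ->
  infinite_sum b lb -> exists la, infinite_sum a la /\ la <= lb.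
Proof.
  intros H Hb. apply isum_bounded. intro i; apply H.
  intro n. apply Rle_trans with (sum_f_R0 b n). apply psum_le; intro; apply H.
  apply isum_le_lim; auto. intro i; destruct (H i); lra.
Qed.

Lemma isum_ext a b l : (forall i, a i = b i) -> infinite_sum a l -> infinite_sum b l.
Proof. intros H Ha. replace b with a; auto. apply functional_extensionality; auto. Qed.

Lemma sum_f_R0_ext a b n : (forall i, a i = b i) -> sum_f_R0 a n = sum_f_R0 b n.
Proof. intro H; induction n; simpl; rewrite ?IHn, ?H; auto. Qed.

Lemma isum_plus a b la lb : infinite_sum a la -> infinite_sum b lb ->
  infinite_sum (fun i => a i + b i) (la + lb).
Proof.
  intros Ha Hb.
  assert (E : sum_f_R0 (fun i => a i + b i) = fun n => sum_f_R0 a n + sum_f_R0 b n).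
  { apply functional_extensionality; intro n; apply plus_sum. }
  change (Un_cv (sum_f_R0 (fun i => a i + b i)) (la + lb)). rewrite E.
  apply CV_plus; auto.
Qed.

Lemma sum_scal_l c a n : sum_f_R0 (fun i => c * a i) n = c * sum_f_R0 a n.
Proof. induction n; simpl; [ring| rewrite IHn; ring]. Qed.

Lemma isum_scal c a la : infinite_sum a la -> infinite_sum (fun i => c * a i) (c * la).
Proof.
  intros Ha.
  assert (E : sum_f_R0 (fun i => c * a i) = fun n => c * sum_f_R0 a n).
  { apply functional_extensionality; intro n; apply sum_scal_l. }
  change (Un_cv (sum_f_R0 (fun i => c * a i)) (c * la)). rewrite E.
  apply CV_mult; auto. apply cv_const.
Qed.

Lemma finite_sum_cv (u : nat -> nat -> R) (c : nat -> R) J :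
  (forall j, Un_cv (fun N => u N j) (c j)) ->
  Un_cv (fun N => sum_f_R0 (u N) J) (sum_f_R0 c J).
Proof. intro H; induction J; simpl; auto. apply CV_plus; auto. Qed.

Lemma sum_swap (a : nat -> nat -> R) N J :
  sum_f_R0 (fun j => sum_f_R0 (fun n => a n j) N) J =
  sum_f_R0 (fun n => sum_f_R0 (fun j => a n j) J) N.
Proof. induction J; simpl; auto. rewrite IHJ, <- plus_sum. reflexivity. Qed.

Lemma tonelli (a : nat -> nat -> R) (Rn : nat -> R) S :
  (forall n j, 0 <= a n j) -> (forall n, infinite_sum (a n) (Rn n)) -> infinite_sum Rn S ->
  exists C : nat -> R, (forall j, infinite_sum (fun n => a n j) (C j)) /\ infinite_sum C S.
Proof.
  intros Hpos Hrow Htot.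
  assert (HRpos : forall n, 0 <= Rn n) by (intro n; apply isum_nonneg with (a n); auto).
  assert (Hex : forall j, exists c, infinite_sum (fun n => a n j) c).
  { intro j. destruct (isum_comp (fun n => a n j) Rn S) as [c [Hc _]]; eauto.
    intro n; split; auto.
    apply Rle_trans with (sum_f_R0 (a n) j).
    - destruct j; simpl; [lra|].
      pose proof (psum_nonneg (a n) j (Hpos n)); lra.
    - apply isum_le_lim; auto. }
  set (C := fun j => proj1_sig (constructive_indefinite_description _ (Hex j))).
  assert (HC : forall j, infinite_sum (fun n => a n j) (C j)).
  { intro j; unfold C; destruct (constructive_indefinite_description _ (Hex j)); auto. }
  assert (HCpos : forall j, 0 <= C j) by (intro j; apply isum_nonneg with (fun n => a n j); auto).
  assert (Hcols : forall J, sum_f_R0 C J <= S).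
  { intro J. apply cv_le_bound with (fun N => sum_f_R0 (fun j => sum_f_R0 (fun n => a n j) N) J).
    - apply finite_sum_cv. intro j; apply HC.
    - intro N. rewrite sum_swap. apply Rle_trans with (sum_f_R0 Rn N).
      + apply psum_le. intro n. apply isum_le_lim; auto.
      + apply isum_le_lim; auto. }
  destruct (isum_bounded C S HCpos Hcols) as [T [HT HTS]].
  exists C; split; auto.
  replace S with T; auto.
  apply Rle_antisym; auto.
  apply cv_le_bound with (sum_f_R0 Rn); auto.
  intro N.
  apply cv_le_bound with (fun J => sum_f_R0 (fun n => sum_f_R0 (fun j => a n j) J) N).
  - apply finite_sum_cv. intro n; apply Hrow.
  - intro J. rewrite <- sum_swap. apply Rle_trans with (sum_f_R0 C J).
    + apply psum_le. intro j. apply isum_le_lim; auto.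
    + apply isum_le_lim; auto.
Qed.

Lemma geom_sum z : 0 <= z < 1 -> infinite_sum (fun n => z ^ n) (/ (1 - z)).
Proof.
  intro Hz. pose proof (GP_infinite z) as H. unfold Pser in H.
  apply isum_ext with (fun n => 1 * z ^ n). intro; ring.
  apply H. rewrite Rabs_right; lra.
Qed.

Lemma geom_sum1 z : 0 <= z < 1 -> infinite_sum (fun i => z ^ S i) (z / (1 - z)).
Proof.
  intro Hz. apply isum_ext with (fun i => z * z ^ i). intro; simpl; ring.
  apply isum_scal. apply geom_sum; auto.
Qed.

(* shiftk k a = (0,...,0, a 0, a 1, ...) with k leading zeros: the coefficients
   of z^k times the power series of a. *)
Definition shiftk (k : nat) (a : nat -> R) (n : nat) : R :=
  if (k <=? n)%nat then a (n - k)%nat else 0.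

Lemma isum_shift1 a l : infinite_sum a l ->
  infinite_sum (fun n => match n with O => 0 | S m => a m end) l.
Proof.
  intros H e He. destruct (H e He) as [N HN]. exists (S N). intros n Hn.
  destruct n; [lia|].
  assert (E : forall m, sum_f_R0 (fun n => match n with O => 0 | S m => a m end) (S m)
                        = sum_f_R0 a m).
  { induction m; simpl; [ring|]. simpl in IHm. rewrite IHm. reflexivity. }
  rewrite E. apply HN. lia.
Qed.

Lemma isum_shiftk k a l : infinite_sum a l -> infinite_sum (shiftk k a) l.
Proof.
  induction k; intro H.
  - apply isum_ext with a; auto. intro i; unfold shiftk; simpl. f_equal; lia.
  - apply isum_ext with (fun n => match n with O => 0 | S m => shiftk k a m end).
    + intro i; unfold shiftk; destruct i; simpl; auto.
    + apply isum_shift1; auto.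
Qed.

Lemma isum_finite b n : (forall k, (n < k)%nat -> b k = 0) -> infinite_sum b (sum_f_R0 b n).
Proof.
  intros H e He. exists n. intros m Hm.
  replace (sum_f_R0 b m) with (sum_f_R0 b n). unfold Rdist; rewrite Rminus_diag, Rabs_R0; auto.
  induction Hm; auto. simpl. rewrite H; [|lia]. lra.
Qed.

Lemma INR_natsum f n : INR (natsum f n) = sum_f_R0 (fun k => INR (f k)) n.
Proof. induction n; simpl natsum; simpl sum_f_R0; auto. rewrite plus_INR, IHn; auto. Qed.

(* sum_n deg d n z^n = (1-z)^{-d}: deg (d+1) is the Cauchy product of deg d
   with the constant sequence 1, so this is Tonelli applied to the product. *)
Lemma deg_gen d z : 0 <= z < 1 ->
  infinite_sum (fun n => INR (deg d n) * z ^ n) (/ (1 - z) ^ d).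
Proof.
  intro Hz. induction d.
  - simpl. replace (/ 1) with (sum_f_R0 (fun n => INR (deg 0 n) * z ^ n) 0).
    + apply isum_finite. intros k Hk. destruct k; [lia|]. simpl. ring.
    + simpl. rewrite Rinv_1. ring.
  - set (a := fun k n => shiftk k (fun m => INR (deg d m) * z ^ m) n * z ^ k).
    assert (Hrow : forall k, infinite_sum (a k) (/ (1 - z) ^ d * z ^ k)).
    { intro k. unfold a.
      apply isum_ext with (fun n => z ^ k * shiftk k (fun m => INR (deg d m) * z ^ m) n).
      intro; ring. rewrite Rmult_comm. apply isum_scal. apply isum_shiftk; auto. }
    assert (Htot : infinite_sum (fun k => / (1 - z) ^ d * z ^ k) (/ (1 - z) ^ S d)).
    { replace (/ (1 - z) ^ S d) with (/ (1 - z) ^ d * / (1 - z)).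
      apply isum_scal. apply geom_sum; auto.
      simpl. rewrite Rinv_mult. ring. }
    assert (Hpos : forall k n, 0 <= a k n).
    { intros k n. unfold a, shiftk. destruct (k <=? n)%nat.
      - apply Rmult_le_pos; [apply Rmult_le_pos|]; try apply pow_le; try lra; apply pos_INR.
      - rewrite Rmult_0_l; lra. }
    destruct (tonelli a _ _ Hpos Hrow Htot) as [C [HC1 HC2]].
    apply isum_ext with C; auto.
    intro n. specialize (HC1 n).
    assert (Hf := isum_finite (fun k => a k n) n).
    rewrite (uniqueness_sum _ _ _ HC1 (Hf ltac:(intros k Hk; unfold a, shiftk;
       replace (k <=? n)%nat with false by (symmetry; apply Nat.leb_gt; lia); ring))).
    simpl deg. rewrite INR_natsum, Rmult_comm, scal_sum.
    clear HC1 Hf.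
    apply sum_eq. intros k Hk. unfold a, shiftk.
    replace (k <=? n)%nat with true by (symmetry; apply Nat.leb_le; lia).
    rewrite Rmult_assoc, <- pow_add. replace (n - k + k)%nat with n by lia. ring.
Qed.

Lemma exp_INR_mult n x : exp (INR n * x) = exp x ^ n.
Proof.
  induction n. simpl. rewrite Rmult_0_l, exp_0; auto.
  rewrite S_INR, Rmult_plus_distr_r, Rmult_1_l, exp_plus, IHn. simpl. ring.
Qed.

Lemma exp_neg_lt1 x : 0 < x -> 0 < exp (- x) < 1.
Proof. intro H; split. apply exp_pos. rewrite <- exp_0. apply exp_increasing. lra. Qed.

Lemma pow_lt1 z n : 0 <= z < 1 -> 0 <= z ^ S n < 1.
Proof.
  intro H; split. apply pow_le; lra.
  induction n. simpl; lra. simpl in *.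
  apply Rle_lt_trans with (z * 1). apply Rmult_le_compat_l; lra. lra.
Qed.

(* q = e^{-beta/kappa}, the ratio of consecutive Boltzmann factors. *)
Definition qk (beta kappa : R) := exp (- (beta / kappa)).

(* s = sum_{i>=1} r^i (1 - q^i)^{-d}: expand r e/(1 - r e) = sum_i (r e)^i in each
   eigenvalue term, swap the sums, and resum over n with deg_gen at z = q^i. *)
Lemma trace_closed d beta kappa r s : 0 < beta -> 0 < kappa -> 0 < r < 1 ->
  TraceVal d beta kappa r s ->
  infinite_sum (fun i => r ^ S i * / (1 - qk beta kappa ^ S i) ^ d) s.
Proof.
  intros Hb Hk Hr HT. unfold TraceVal in HT.
  set (q := qk beta kappa).
  assert (Hq : 0 < q < 1).
  { unfold q, qk. apply exp_neg_lt1. apply Rdiv_lt_0_compat; lra. }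
  assert (HE : forall n, exp (- beta * INR n / kappa) = q ^ n).
  { intro n. unfold q, qk. rewrite <- exp_INR_mult. f_equal. field. lra. }
  set (a := fun n i => INR (deg d n) * (r * q ^ n) ^ S i).
  assert (Hpos : forall n i, 0 <= a n i).
  { intros n i; unfold a. apply Rmult_le_pos. apply pos_INR. apply pow_le.
    apply Rmult_le_pos. lra. apply pow_le; lra. }
  assert (Hrow : forall n, infinite_sum (a n)
     (INR (deg d n) * (r * exp (- beta * INR n / kappa) / (1 - r * exp (- beta * INR n / kappa))))).
  { intro n. rewrite HE. unfold a.
    assert (Hz : 0 <= r * q ^ n < 1).
    { split. apply Rmult_le_pos. lra. apply pow_le; lra.
      apply Rle_lt_trans with (r * 1). apply Rmult_le_compat_l. lra.
      destruct n. simpl; lra. left; apply pow_lt1; lra. lra. }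
    apply isum_scal. apply geom_sum1. auto. }
  destruct (tonelli a _ _ Hpos Hrow HT) as [C [HC1 HC2]].
  apply isum_ext with C; auto.
  intro i. specialize (HC1 i).
  apply uniqueness_sum with (fun n => a n i); auto.
  unfold a.
  apply isum_ext with (fun n => r ^ S i * (INR (deg d n) * (q ^ S i) ^ n)).
  { intro n. rewrite Rpow_mult_distr. rewrite <- !pow_mult. rewrite Nat.mul_comm. ring. }
  apply isum_scal. apply deg_gen. apply pow_lt1. lra.
Qed.

Definition Lterm (k : nat) (z : R) (i : nat) : R := z ^ S i / INR (S i) ^ k.

(* The sum of the series when it converges (0 otherwise). *)
Definition Li (k : nat) (z : R) : R :=
  match excluded_middle_informative (exists l, infinite_sum (Lterm k z) l) with
  | left H => proj1_sig (constructive_indefinite_description _ H)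
  | right _ => 0
  end.

Lemma Li_eq k z l : infinite_sum (Lterm k z) l -> Li k z = l.
Proof.
  intro H. unfold Li. destruct excluded_middle_informative as [H1|H1].
  - destruct constructive_indefinite_description as [l' Hl']. simpl.
    eapply uniqueness_sum; eauto.
  - exfalso; apply H1; eauto.
Qed.

Lemma INR_S_pow_ge1 i k : 1 <= INR (S i) ^ k.
Proof.
  induction k. simpl; lra. change (INR (S i) ^ S k) with (INR (S i) * INR (S i) ^ k).
  assert (1 <= INR (S i)) by (rewrite S_INR; pose proof (pos_INR i); lra).
  replace 1 with (1 * 1) by ring. apply Rmult_le_compat; lra.
Qed.

Lemma Lterm_bounds k z i : 0 <= z -> 0 <= Lterm k z i <= z ^ S i.
Proof.
  intro Hz. unfold Lterm. pose proof (INR_S_pow_ge1 i k).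
  assert (0 <= z ^ S i) by (apply pow_le; lra).
  split. unfold Rdiv; apply Rmult_le_pos; [lra|]. left; apply Rinv_0_lt_compat; lra.
  unfold Rdiv. rewrite <- (Rmult_1_r (z ^ S i)) at 2. apply Rmult_le_compat_l; auto.
  rewrite <- Rinv_1. apply Rinv_le_contravar; lra.
Qed.

(* The series converges on [0,1), by comparison with the geometric series. *)
Lemma Li_spec k z : 0 <= z < 1 -> infinite_sum (Lterm k z) (Li k z).
Proof.
  intro Hz.
  destruct (isum_comp (Lterm k z) _ _ (fun i => Lterm_bounds k z i (proj1 Hz)) (geom_sum1 z Hz))
    as [l [Hl _]].
  rewrite (Li_eq k z l Hl). auto.
Qed.

Lemma Li_bounds k z : 0 <= z < 1 -> 0 <= Li k z <= z / (1 - z).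
Proof.
  intro Hz. split.
  - apply isum_nonneg with (Lterm k z). intro i; apply Lterm_bounds; lra. apply Li_spec; auto.
  - apply isum_le with (Lterm k z) (fun i => z ^ S i). intro i; apply Lterm_bounds; lra.
    apply Li_spec; auto. apply geom_sum1; auto.
Qed.

Lemma Li_0 z : 0 <= z < 1 -> Li 0 z = z / (1 - z).
Proof.
  intro Hz. apply Li_eq. apply isum_ext with (fun i => z ^ S i).
  intro i; unfold Lterm; simpl; field. apply geom_sum1; auto.
Qed.

Lemma Li_mono k a b : 0 <= a <= b -> b < 1 -> Li k a <= Li k b.
Proof.
  intros Hab Hb. apply isum_le with (Lterm k a) (Lterm k b).
  - intro i. unfold Lterm, Rdiv. apply Rmult_le_compat_r.
    left; apply Rinv_0_lt_compat. pose proof (INR_S_pow_ge1 i k); lra.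
    apply pow_incr; lra.
  - apply Li_spec; lra.
  - apply Li_spec; lra.
Qed.

(* sum_{i<=n} 1/(i+1)^2 <= 2 - 1/(n+1) (telescoping against 1/i - 1/(i+1)). *)
Lemma sum_inv_sq n : sum_f_R0 (fun i => / INR (S i) ^ 2) n <= 2 - / INR (S n).
Proof.
  induction n.
  - simpl. lra.
  - rewrite tech5. repeat rewrite S_INR in *.
    pose proof (pos_INR n).
    assert (/ (INR n + 1 + 1) ^ 2 + / (INR n + 1 + 1) <= / (INR n + 1)).
    { apply Rmult_le_reg_r with ((INR n + 1 + 1) ^ 2 * (INR n + 1)).
      apply Rmult_lt_0_compat. apply pow_lt; lra. lra.
      field_simplify; try lra. }
    lra.
Qed.

(* A uniform bound for k >= 2, from sum 1/n^2 <= 2. *)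
Lemma Li_le2 k z : (2 <= k)%nat -> 0 <= z < 1 -> Li k z <= 2.
Proof.
  intros Hk Hz.
  apply cv_le_bound with (sum_f_R0 (Lterm k z)). apply Li_spec; auto.
  intro n. apply Rle_trans with (sum_f_R0 (fun i => / INR (S i) ^ 2) n).
  - apply psum_le. intro i. unfold Lterm, Rdiv.
    assert (0 <= z ^ S i <= 1).
    { split. apply pow_le; lra. left; apply pow_lt1 with (n := i); lra. }
    assert (INR (S i) ^ 2 <= INR (S i) ^ k).
    { replace k with (2 + (k - 2))%nat by lia. rewrite pow_add.
      rewrite <- (Rmult_1_r (INR (S i) ^ 2)) at 1. apply Rmult_le_compat_l.
      apply pow_le, pos_INR. apply INR_S_pow_ge1. }
    pose proof (INR_S_pow_ge1 i 2).
    apply Rle_trans with (1 * / INR (S i) ^ k).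
    apply Rmult_le_compat_r. left; apply Rinv_0_lt_compat; lra. lra.
    rewrite Rmult_1_l. apply Rinv_le_contravar; lra.
  - pose proof (sum_inv_sq n). pose proof (pos_INR (S n)).
    assert (0 < / INR (S n)). apply Rinv_0_lt_compat. rewrite S_INR; pose proof (pos_INR n); lra.
    lra.
Qed.

Lemma pow_diff_le a b n : 0 <= b <= a -> a ^ S n - b ^ S n <= INR (S n) * a ^ n * (a - b).
Proof.
  intro H. induction n.
  - simpl. lra.
  - assert (b ^ S n <= a ^ S n) by (apply pow_incr; lra).
    replace (a ^ S (S n) - b ^ S (S n)) with (a * (a ^ S n - b ^ S n) + b ^ S n * (a - b))
      by (simpl; ring).
    rewrite S_INR.
    apply Rle_trans with (a * (INR (S n) * a ^ n * (a - b)) + a ^ S n * (a - b)).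
    apply Rplus_le_compat. apply Rmult_le_compat_l; lra. apply Rmult_le_compat_r; lra.
    simpl. lra.
Qed.

(* Lipschitz bound on [0, rho] for k >= 1, comparing termwise with sum rho^i (b - a). *)
Lemma Li_lip k a b rho : (1 <= k)%nat -> 0 <= a <= b -> b <= rho -> rho < 1 ->
  Li k b - Li k a <= (b - a) / (1 - rho).
Proof.
  intros Hk Hab Hbr Hr.
  assert (H1 : infinite_sum (fun i => Lterm k b i + -1 * Lterm k a i) (Li k b + -1 * Li k a)).
  { apply isum_plus. apply Li_spec; lra. apply isum_scal. apply Li_spec; lra. }
  assert (H2 : infinite_sum (fun i => (b - a) * rho ^ i) ((b - a) * / (1 - rho))).
  { apply isum_scal. apply geom_sum. lra. }
  replace (Li k b - Li k a) with (Li k b + -1 * Li k a) by ring.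
  unfold Rdiv. eapply isum_le; [|exact H1|exact H2].
  intro i. unfold Lterm, Rdiv.
  pose proof (INR_S_pow_ge1 i k) as Hp.
  replace (b ^ S i * / INR (S i) ^ k + -1 * (a ^ S i * / INR (S i) ^ k)) with
     ((b ^ S i - a ^ S i) * / INR (S i) ^ k) by ring.
  assert (HS : INR (S i) <= INR (S i) ^ k).
  { replace k with (1 + (k - 1))%nat by lia. rewrite pow_add, pow_1.
    rewrite <- (Rmult_1_r (INR (S i))) at 1. apply Rmult_le_compat_l.
    apply pos_INR. apply INR_S_pow_ge1. }
  assert (HS0 : 0 < INR (S i)) by (rewrite S_INR; pose proof (pos_INR i); lra).
  pose proof (pow_diff_le b a i ltac:(lra)).
  assert (a ^ S i <= b ^ S i) by (apply pow_incr; lra).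
  assert (b ^ i <= rho ^ i) by (apply pow_incr; lra).
  apply Rle_trans with (INR (S i) * b ^ i * (b - a) * / INR (S i) ^ k).
  apply Rmult_le_compat_r. left; apply Rinv_0_lt_compat; lra. auto.
  apply Rle_trans with (INR (S i) * b ^ i * (b - a) * / INR (S i)).
  apply Rmult_le_compat_l. apply Rmult_le_pos. apply Rmult_le_pos. lra. apply pow_le; lra. lra.
  apply Rinv_le_contravar; lra.
  replace (INR (S i) * b ^ i * (b - a) * / INR (S i)) with (b ^ i * (b - a)) by (field; lra).
  rewrite Rmult_comm. apply Rmult_le_compat_l; lra.
Qed.

(* A Lipschitz bound valid for every k, including Li_0(z) = z/(1-z). *)
Lemma Li_lip_all k a b rho : 0 <= a <= b -> b <= rho -> rho < 1 ->
  Li k b - Li k a <= (b - a) / (1 - rho) ^ 2.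
Proof.
  intros Hab Hbr Hr.
  assert (Hq : (b - a) / (1 - rho) <= (b - a) / (1 - rho) ^ 2).
  { unfold Rdiv. apply Rmult_le_compat_l. lra. apply Rinv_le_contravar. apply pow_lt; lra.
    replace ((1 - rho) ^ 2) with ((1 - rho) * (1 - rho)) by ring. nra. }
  destruct k.
  - rewrite !Li_0 by lra.
    replace (b / (1 - b) - a / (1 - a)) with ((b - a) / ((1 - a) * (1 - b))) by (field; lra).
    unfold Rdiv. apply Rmult_le_compat_l. lra. apply Rinv_le_contravar. nra.
    replace ((1 - rho) ^ 2) with ((1 - rho) * (1 - rho)) by ring. apply Rmult_le_compat; lra.
  - pose proof (Li_lip (S k) a b rho ltac:(lia) Hab Hbr Hr). lra.
Qed.

Lemma Li_lip_abs k a b rho : 0 <= a <= rho -> 0 <= b <= rho -> rho < 1 ->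
  Rabs (Li k b - Li k a) <= Rabs (b - a) / (1 - rho) ^ 2.
Proof.
  intros Ha Hb Hr. destruct (Rle_dec a b).
  - pose proof (Li_mono k a b ltac:(lra) ltac:(lra)).
    rewrite !Rabs_right by lra. apply Li_lip_all; lra.
  - pose proof (Li_mono k b a ltac:(lra) ltac:(lra)).
    rewrite !Rabs_left1 by lra.
    replace (- (Li k b - Li k a)) with (Li k a - Li k b) by ring.
    replace (- (b - a)) with (a - b) by ring. apply Li_lip_all; lra.
Qed.

(* Li_k is continuous on (0,1), by the Lipschitz bound on [0,(1+t)/2]. *)
Lemma Li_continuous k t : 0 < t < 1 -> continuity_pt (Li k) t.
Proof.
  intros Ht. unfold continuity_pt, continue_in, limit1_in, limit_in. simpl. unfold Rdist.
  intros eps He.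
  set (rho := (1 + t) / 2).
  assert (Hr2 : 0 < (1 - rho) ^ 2) by (apply pow_lt; unfold rho; lra).
  exists (Rmin ((1 - t) / 2) (Rmin t (eps * (1 - rho) ^ 2))).
  pose proof (Rmin_l ((1 - t) / 2) (Rmin t (eps * (1 - rho) ^ 2))).
  pose proof (Rmin_r ((1 - t) / 2) (Rmin t (eps * (1 - rho) ^ 2))).
  pose proof (Rmin_l t (eps * (1 - rho) ^ 2)). pose proof (Rmin_r t (eps * (1 - rho) ^ 2)).
  split. apply Rmin_glb_lt. lra. apply Rmin_glb_lt. lra. nra.
  intros x [_ Hx].
  pose proof (Rabs_def2 _ _ Hx) as [Hx1 Hx2].
  apply Rle_lt_trans with (Rabs (x - t) / (1 - rho) ^ 2).
  - apply Li_lip_abs; unfold rho; lra.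
  - apply Rmult_lt_reg_r with ((1 - rho) ^ 2). auto.
    unfold Rdiv. rewrite Rmult_assoc, Rinv_l by lra. lra.
Qed.

Lemma pow_le1 x n : 0 <= x <= 1 -> x ^ n <= 1.
Proof.
  intro H. induction n; simpl. lra. replace 1 with (1*1) by ring.
  apply Rmult_le_compat; try lra. apply pow_le; lra.
Qed.

Lemma pow_ge1 x n : 1 <= x -> 1 <= x ^ n.
Proof.
  intro H. induction n; simpl. lra. replace 1 with (1*1) by ring. apply Rmult_le_compat; lra.
Qed.

Lemma zeta_term_pos d k : 0 < / INR (S k) ^ d.
Proof. apply Rinv_0_lt_compat; pose proof (INR_S_pow_ge1 k d); lra. Qed.

Lemma Li_le_zeta d z zeta : ZetaVal d zeta -> 0 <= z < 1 -> Li d z <= zeta.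
Proof.
  intros HZ Hz. apply isum_le with (Lterm d z) (fun k => / INR (S k) ^ d); auto.
  - intro i. unfold Lterm, Rdiv. rewrite <- (Rmult_1_l (/ INR (S i) ^ d)) at 2.
    apply Rmult_le_compat_r. left; apply zeta_term_pos. apply pow_le1; lra.
  - apply Li_spec; auto.
Qed.

(* Given eps, truncate zeta at N with error eps/2; for z close enough to 1 the
   factor z^{N+1} costs at most another eps/2 on the truncated sum. *)
Lemma Li_to_zeta d zeta : ZetaVal d zeta -> forall eps, 0 < eps ->
  exists delta, 0 < delta < 1 /\ forall z, 1 - delta <= z < 1 -> zeta - eps < Li d z.
Proof.
  intros HZ eps He.
  assert (Hz0 : 0 <= zeta) by (apply isum_nonneg with (fun k => / INR (S k) ^ d); auto;
    intro i; left; apply zeta_term_pos).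
  destruct (HZ (eps / 2) ltac:(lra)) as [N HN].
  specialize (HN N (Nat.le_refl N)). unfold Rdist in HN.
  set (P := sum_f_R0 (fun k => / INR (S k) ^ d) N) in *.
  assert (HP : 0 <= P <= zeta).
  { split. apply psum_nonneg. intro i. left; apply zeta_term_pos.
    apply isum_le_lim; auto. intro i. left; apply zeta_term_pos. }
  assert (HSN : 0 < INR (S N)) by (rewrite S_INR; pose proof (pos_INR N); lra).
  set (delta := Rmin (1/2) (eps / (2 * INR (S N) * (zeta + 1)))).
  assert (Hd0 : 0 < eps / (2 * INR (S N) * (zeta + 1))) by (apply Rdiv_lt_0_compat; nra).
  pose proof (Rmin_l (1/2) (eps / (2 * INR (S N) * (zeta + 1)))).
  pose proof (Rmin_r (1/2) (eps / (2 * INR (S N) * (zeta + 1)))).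
  exists delta. split. unfold delta; split. apply Rmin_glb_lt; lra. lra.
  intros z Hz.
  assert (Hz0' : 0 <= z) by (unfold delta in Hz; lra).
  assert (Htrunc : z ^ S N * P <= Li d z).
  { apply Rle_trans with (sum_f_R0 (Lterm d z) N).
    - unfold P. rewrite scal_sum. apply sum_Rle. intros i Hi. unfold Lterm, Rdiv.
      rewrite (Rmult_comm (z ^ S i)). apply Rmult_le_compat_l. left; apply zeta_term_pos.
      replace (S N) with (S i + (N - i))%nat by lia. rewrite pow_add.
      rewrite <- (Rmult_1_r (z ^ S i)) at 2. apply Rmult_le_compat_l. apply pow_le; lra.
      apply pow_le1; lra.
    - apply isum_le_lim. intro i; apply Lterm_bounds; lra. apply Li_spec; lra. }
  pose proof (pow_diff_le 1 z N ltac:(lra)) as Hpow. rewrite pow1, pow1 in Hpow.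
  assert (Hdelta : (1 - z) * INR (S N) * (zeta + 1) <= eps / 2).
  { apply Rle_trans with (eps / (2 * INR (S N) * (zeta + 1)) * INR (S N) * (zeta + 1)).
    apply Rmult_le_compat_r. lra. apply Rmult_le_compat_r. lra. unfold delta in Hz. lra.
    right. field. split; lra. }
  assert (Hloss : (1 - z ^ S N) * P <= (1 - z) * INR (S N) * (zeta + 1)).
  { apply Rle_trans with (INR (S N) * (1 - z) * P). apply Rmult_le_compat_r; lra.
    replace ((1 - z) * INR (S N) * (zeta + 1)) with (INR (S N) * (1 - z) * (zeta + 1)) by ring.
    apply Rmult_le_compat_l. apply Rmult_le_pos; lra. lra. }
  apply Rabs_def2 in HN. lra.
Qed.

Definition Fn (d : nat) (beta lambda : R) (t : R) : R :=
  ln t / (beta * lambda) + Li d t / beta ^ d.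

Lemma Fn_strict d beta lambda a b : 0 < beta -> 0 < lambda -> 0 < a < b -> b < 1 ->
  Fn d beta lambda a < Fn d beta lambda b.
Proof.
  intros Hb Hl Hab Hb1. unfold Fn.
  assert (ln a < ln b) by (apply ln_increasing; lra).
  assert (Li d a <= Li d b) by (apply Li_mono; lra).
  assert (0 < beta ^ d) by (apply pow_lt; lra).
  assert (ln a / (beta * lambda) < ln b / (beta * lambda)).
  { unfold Rdiv. apply Rmult_lt_compat_r. apply Rinv_0_lt_compat; nra. auto. }
  assert (Li d a / beta ^ d <= Li d b / beta ^ d).
  { unfold Rdiv. apply Rmult_le_compat_r. left; apply Rinv_0_lt_compat; nra. auto. }
  lra.
Qed.

Lemma Fn_mono d beta lambda a b : 0 < beta -> 0 < lambda -> 0 < a <= b -> b < 1 ->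
  Fn d beta lambda a <= Fn d beta lambda b.
Proof. intros. destruct (Req_dec a b). subst; lra. left; apply Fn_strict; lra. Qed.

Lemma ln_lt0 t : 0 < t < 1 -> ln t < 0.
Proof. intro H. rewrite <- ln_1. apply ln_increasing; lra. Qed.

Lemma ln_ge t : 0 < t -> 1 - / t <= ln t.
Proof.
  intro Ht. pose proof (exp_ineq1_le (- ln t)). rewrite exp_Ropp, exp_ln in H by auto. lra.
Qed.

Lemma Fn_lt_zeta d beta lambda zeta t : 0 < beta -> 0 < lambda -> ZetaVal d zeta ->
  0 < t < 1 -> Fn d beta lambda t < zeta / beta ^ d.
Proof.
  intros Hb Hl HZ Ht. unfold Fn.
  pose proof (ln_lt0 t Ht). pose proof (Li_le_zeta d t zeta HZ ltac:(lra)).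
  assert (0 < beta ^ d) by (apply pow_lt; lra).
  assert (ln t / (beta * lambda) < 0).
  { unfold Rdiv. assert (0 < / (beta * lambda)) by (apply Rinv_0_lt_compat; nra). nra. }
  assert (Li d t / beta ^ d <= zeta / beta ^ d).
  { unfold Rdiv. apply Rmult_le_compat_r. left; apply Rinv_0_lt_compat; lra. auto. }
  lra.
Qed.

Lemma Fn_near1 d beta lambda zeta : 0 < beta -> 0 < lambda -> ZetaVal d zeta ->
  forall eps, 0 < eps -> exists delta, 0 < delta < 1 /\
   forall t, 1 - delta <= t < 1 -> zeta / beta ^ d - eps < Fn d beta lambda t.
Proof.
  intros Hb Hl HZ eps He.
  assert (HB : 0 < beta ^ d) by (apply pow_lt; lra).
  destruct (Li_to_zeta d zeta HZ (eps * beta ^ d / 2) ltac:(apply Rdiv_lt_0_compat; nra))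
    as [d1 [Hd1 H1]].
  set (delta := Rmin d1 (Rmin (1/2) (eps * beta * lambda / 8))).
  assert (Hd2 : 0 < eps * beta * lambda / 8)
    by (apply Rdiv_lt_0_compat; [|lra]; apply Rmult_lt_0_compat; nra).
  assert (Hdl : delta <= d1 /\ delta <= 1/2 /\ delta <= eps * beta * lambda / 8).
  { unfold delta. pose proof (Rmin_l d1 (Rmin (1/2) (eps * beta * lambda / 8))).
    pose proof (Rmin_r d1 (Rmin (1/2) (eps * beta * lambda / 8))).
    pose proof (Rmin_l (1/2) (eps * beta * lambda / 8)).
    pose proof (Rmin_r (1/2) (eps * beta * lambda / 8)). lra. }
  exists delta. split. split. unfold delta. apply Rmin_glb_lt. lra. apply Rmin_glb_lt; lra. lra.
  intros t Ht.
  specialize (H1 t ltac:(lra)).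
  unfold Fn.
  pose proof (ln_ge t ltac:(lra)).
  assert (Hlt : - (eps / 2) < ln t / (beta * lambda)).
  { apply Rmult_lt_reg_r with (beta * lambda). nra.
    unfold Rdiv. rewrite Rmult_assoc, Rinv_l by nra. rewrite Rmult_1_r.
    assert (1 - / t >= - (2 * (1 - t))).
    { assert (/ t <= 2) by (replace 2 with (/ (1/2)) by field; apply Rinv_le_contravar; lra).
      replace (1 - / t) with (- ((1 - t) * / t)) by (field; lra).
      apply Ropp_le_ge_contravar. rewrite (Rmult_comm 2). apply Rmult_le_compat_l; lra. }
    nra. }
  assert (Hli : zeta / beta ^ d - eps / 2 < Li d t / beta ^ d).
  { apply Rmult_lt_reg_r with (beta ^ d). auto.
    unfold Rdiv. rewrite !Rmult_minus_distr_r, !Rmult_assoc, Rinv_l by lra. rewrite !Rmult_1_r.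
    lra. }
  lra.
Qed.

Lemma Fn_cont d beta lambda t : 0 < t < 1 -> continuity_pt (Fn d beta lambda) t.
Proof.
  intros Ht. unfold Fn.
  apply continuity_pt_plus.
  - apply continuity_pt_mult. apply derivable_continuous_pt. exists (/ t).
    apply derivable_pt_lim_ln. lra.
    apply continuity_pt_const. intros a b; reflexivity.
  - apply continuity_pt_mult. apply Li_continuous; auto.
    apply continuity_pt_const. intros a b; reflexivity.
Qed.

Lemma Fn_small d beta lambda c : 0 < beta -> 0 < lambda ->
  exists a, 0 < a <= 1/2 /\ Fn d beta lambda a < c.
Proof.
  intros Hb Hl.
  assert (HB : 0 < beta ^ d) by (apply pow_lt; lra).
  set (a := Rmin (1/2) (exp (beta * lambda * (c - / beta ^ d - 1)))).
  assert (Ha : 0 < a <= 1/2).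
  { unfold a. split. apply Rmin_glb_lt. lra. apply exp_pos. apply Rmin_l. }
  exists a. split; auto. unfold Fn.
  assert (ln a <= beta * lambda * (c - / beta ^ d - 1)).
  { rewrite <- (ln_exp (beta * lambda * (c - / beta ^ d - 1))).
    assert (Hamin : a <= exp (beta * lambda * (c - / beta ^ d - 1))) by apply Rmin_r.
    destruct (Rle_lt_or_eq_dec _ _ Hamin) as [Hlt|Heq].
    - left; apply ln_increasing; lra.
    - rewrite Heq; lra. }
  assert (ln a / (beta * lambda) <= c - / beta ^ d - 1).
  { apply Rmult_le_reg_r with (beta * lambda). nra. unfold Rdiv.
    rewrite Rmult_assoc, Rinv_l by nra. lra. }
  pose proof (Li_bounds d a ltac:(lra)).
  assert (a / (1 - a) <= 1)
    by (apply Rmult_le_reg_r with (1 - a); [lra|]; unfold Rdiv;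
        rewrite Rmult_assoc, Rinv_l by lra; lra).
  assert (Li d a / beta ^ d <= / beta ^ d).
  { unfold Rdiv. rewrite <- (Rmult_1_l (/ beta ^ d)) at 2. apply Rmult_le_compat_r.
    left; apply Rinv_0_lt_compat; lra. lra. }
  lra.
Qed.

(* Below the critical value the equation F(t) = c has a solution in (0,1)
   (intermediate value theorem between Fn_small and Fn_near1). *)
Lemma Fn_root d beta lambda zeta c : 0 < beta -> 0 < lambda -> ZetaVal d zeta ->
  c < zeta / beta ^ d -> exists t, 0 < t < 1 /\ Fn d beta lambda t = c.
Proof.
  intros Hb Hl HZ Hc.
  destruct (Fn_small d beta lambda c Hb Hl) as [a [Ha Hac]].
  destruct (Fn_near1 d beta lambda zeta Hb Hl HZ (zeta / beta ^ d - c) ltac:(lra))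
    as [dl [Hdl Hnear]].
  set (b := Rmax (1 - dl) ((a + 1) / 2)).
  assert (Hb1 : 1 - dl <= b /\ (a + 1) / 2 <= b /\ b < 1).
  { unfold b. split. apply Rmax_l. split. apply Rmax_r. apply Rmax_lub_lt; lra. }
  specialize (Hnear b ltac:(lra)).
  destruct (IVT_interv (fun t => Fn d beta lambda t - c) a b) as [t [Ht1 Ht2]].
  - intros t Ht. apply continuity_pt_minus. apply Fn_cont; lra.
    apply continuity_pt_const; intros ? ?; auto.
  - lra.
  - lra.
  - lra.
  - exists t. split; lra.
Qed.

Lemma exp_neg_mul_exp x : exp (- x) * exp x = 1.
Proof. rewrite <- exp_plus. replace (- x + x) with 0 by ring. apply exp_0. Qed.

Lemma phi_lower n x : 0 < x ->
  1 + (/ x) ^ S n - (/ x) ^ n <= / (1 - exp (- x)) ^ S n.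
Proof.
  intros Hx.
  pose proof (exp_ineq1_le (- x)). pose proof (exp_pos (- x)).
  assert (Hu : exp (- x) < 1) by (apply exp_neg_lt1; lra).
  rewrite <- pow_inv.
  destruct (Rle_dec x 1) as [H1|H1].
  - assert (Hy : 1 <= / x) by (rewrite <- Rinv_1; apply Rinv_le_contravar; lra).
    assert (1 <= (/ x) ^ n) by (apply pow_ge1; lra).
    assert ((/ x) ^ S n <= (/ (1 - exp (- x))) ^ S n).
    { apply pow_incr. split. left; apply Rinv_0_lt_compat; lra. apply Rinv_le_contravar; lra. }
    lra.
  - assert (Hy : 0 < / x <= 1).
    { split. apply Rinv_0_lt_compat; lra. rewrite <- Rinv_1. apply Rinv_le_contravar; lra. }
    assert ((/ x) ^ S n <= (/ x) ^ n).
    { simpl. rewrite <- (Rmult_1_l ((/ x) ^ n)) at 2.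
      apply Rmult_le_compat_r. apply pow_le; lra. lra. }
    assert (1 <= (/ (1 - exp (- x))) ^ S n).
    { apply pow_ge1. rewrite <- Rinv_1. apply Rinv_le_contravar; lra. }
    lra.
Qed.

(* For x <= 1: 1/(1-e^{-x}) <= 1 + 1/x, and (1+y)^{n+1} - y^{n+1} <= (n+1)(2y)^n. *)
Lemma phi_upper_small n x : 0 < x <= 1 ->
  / (1 - exp (- x)) ^ S n <= (/ x) ^ S n + INR (S n) * 2 ^ n * (/ x) ^ n.
Proof.
  intros Hx.
  pose proof (exp_ineq1_le x). pose proof (exp_pos (- x)). pose proof (exp_neg_mul_exp x).
  assert (Hu : exp (- x) < 1) by (apply exp_neg_lt1; lra).
  rewrite <- pow_inv.
  set (y := / x).
  assert (Hy : 1 <= y) by (unfold y; rewrite <- Rinv_1; apply Rinv_le_contravar; lra).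
  assert (Ha : / (1 - exp (- x)) <= 1 + y).
  { unfold y. assert (1 - exp (- x) >= x / (1 + x)).
    { assert (exp (- x) <= / (1 + x)).
      { apply Rmult_le_reg_r with (1 + x). lra. rewrite Rinv_l by lra.
        apply Rle_trans with (exp (- x) * exp x). apply Rmult_le_compat_l; lra. lra. }
      assert (/ (1 + x) = 1 - x / (1 + x)) by (field; lra). lra. }
    replace (1 + / x) with (/ (x / (1 + x))) by (field; lra).
    apply Rinv_le_contravar. apply Rdiv_lt_0_compat; lra. lra. }
  assert (HaP : (/ (1 - exp (- x))) ^ S n <= (1 + y) ^ S n).
  { apply pow_incr. split; auto. left; apply Rinv_0_lt_compat; lra. }
  pose proof (pow_diff_le (1 + y) y n ltac:(lra)) as Hdiff.
  replace (1 + y - y) with 1 in Hdiff by ring.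
  assert ((1 + y) ^ n <= (2 * y) ^ n) by (apply pow_incr; lra).
  rewrite Rpow_mult_distr in H2.
  assert (INR (S n) * (1 + y) ^ n <= INR (S n) * (2 ^ n * y ^ n))
    by (apply Rmult_le_compat_l; [apply pos_INR | lra]).
  lra.
Qed.

(* For x >= 1: a = 1/(1-e^{-x}) lies in [1,2] with a - 1 <= 2 e^{-x}. *)
Lemma phi_upper_large n x : 1 <= x ->
  / (1 - exp (- x)) ^ S n <= 1 + INR (S n) * 2 ^ S n * exp (- x).
Proof.
  intros Hx.
  pose proof (exp_pos (- x)).
  assert (Hu : exp (- x) < 1) by (apply exp_neg_lt1; lra).
  rewrite <- pow_inv.
  assert (Hu2 : exp (- x) <= / 2).
  { apply Rle_trans with (exp (Ropp 1)).
    { destruct (Rle_lt_or_eq_dec _ _ Hx) as [Hlt|<-]; [left; apply exp_increasing|]; lra. }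
    rewrite exp_Ropp. apply Rinv_le_contravar. lra. pose proof (exp_ineq1_le 1); lra. }
  set (a := / (1 - exp (- x))).
  assert (Ha1 : 1 <= a) by (unfold a; rewrite <- Rinv_1; apply Rinv_le_contravar; lra).
  assert (Ha2 : a <= 2)
    by (unfold a; replace 2 with (/ / 2) by field; apply Rinv_le_contravar; lra).
  assert (Ha3 : a - 1 <= 2 * exp (- x)).
  { unfold a. replace (/ (1 - exp (- x)) - 1) with (exp (- x) / (1 - exp (- x))) by (field; lra).
    unfold Rdiv. rewrite Rmult_comm. apply Rmult_le_compat_r. lra.
    replace 2 with (/ / 2) by field. apply Rinv_le_contravar; lra. }
  pose proof (pow_diff_le a 1 n ltac:(lra)) as Hq1. rewrite pow1 in Hq1.
  assert (a ^ n <= 2 ^ n) by (apply pow_incr; lra).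
  assert (0 <= INR (S n)) by apply pos_INR.
  assert (INR (S n) * a ^ n * (a - 1) <= INR (S n) * 2 ^ n * (2 * exp (- x))).
  { apply Rmult_le_compat. apply Rmult_le_pos; auto. apply pow_le; lra. lra.
    apply Rmult_le_compat_l; lra. lra. }
  replace (2 ^ S n) with (2 * 2 ^ n) by (simpl; ring). lra.
Qed.

Lemma phi_upper n x : 0 < x ->
  / (1 - exp (- x)) ^ S n <= 1 + (/ x) ^ S n + INR (S n) * 2 ^ n * (/ x) ^ n
     + INR (S n) * 2 ^ S n * exp (- x).
Proof.
  intros Hx.
  assert (0 <= (/ x) ^ S n) by (apply pow_le; left; apply Rinv_0_lt_compat; lra).
  assert (0 <= INR (S n) * 2 ^ n * (/ x) ^ n).
  { apply Rmult_le_pos. apply Rmult_le_pos. apply pos_INR. apply pow_le; lra.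
    apply pow_le; left; apply Rinv_0_lt_compat; lra. }
  assert (0 <= INR (S n) * 2 ^ S n * exp (- x)).
  { apply Rmult_le_pos. apply Rmult_le_pos. apply pos_INR. apply pow_le; lra.
    left; apply exp_pos. }
  destruct (Rle_dec x 1).
  - pose proof (phi_upper_small n x ltac:(lra)). lra.
  - pose proof (phi_upper_large n x ltac:(lra)). lra.
Qed.

Lemma qk_pow beta kappa i : 0 < kappa ->
  qk beta kappa ^ S i = exp (- (beta * INR (S i) / kappa)).
Proof. intro Hk. unfold qk. rewrite <- exp_INR_mult. f_equal. field. lra. Qed.

Lemma INR_S_pos i : 0 < INR (S i).
Proof. rewrite S_INR; pose proof (pos_INR i); lra. Qed.

(* With x_i = beta (i+1)/kappa, the term r^{i+1} x_i^{-j}/kappa^{k+j} is a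
   polylogarithm term: r^{i+1}/((i+1)^j kappa^k beta^j). *)
Lemma Lterm_rescale k j r beta kappa i : 0 < beta -> 0 < kappa ->
  / kappa ^ (k + j) * (r ^ S i * (/ (beta * INR (S i) / kappa)) ^ j)
  = / (kappa ^ k * beta ^ j) * Lterm j r i.
Proof.
  intros Hb Hk. pose proof (INR_S_pos i). unfold Lterm.
  replace (/ (beta * INR (S i) / kappa)) with (kappa * / beta * / INR (S i)) by (field; lra).
  rewrite !Rpow_mult_distr, !pow_inv, pow_add.
  field. repeat split; apply pow_nonzero; lra.
Qed.

Lemma Lterm_rescale_top m r beta kappa i : 0 < beta -> 0 < kappa ->
  / kappa ^ S m * (r ^ S i * (/ (beta * INR (S i) / kappa)) ^ S m)
  = / beta ^ S m * Lterm (S m) r i.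
Proof.
  intros Hb Hk. pose proof (Lterm_rescale 0 (S m) r beta kappa i Hb Hk) as E.
  rewrite Nat.add_0_l, pow_O, Rmult_1_l in E. exact E.
Qed.

Lemma Lterm_rescale_sub m r beta kappa i : 0 < beta -> 0 < kappa ->
  / kappa ^ S m * (r ^ S i * (/ (beta * INR (S i) / kappa)) ^ m)
  = / (kappa * beta ^ m) * Lterm m r i.
Proof.
  intros Hb Hk. pose proof (Lterm_rescale 1 m r beta kappa i Hb Hk) as E.
  rewrite Nat.add_1_l, pow_1 in E. exact E.
Qed.

Lemma trace_term_lower m beta kappa r i : 0 < beta -> 0 < kappa -> 0 <= r ->
  / kappa ^ S m * r ^ S i + / beta ^ S m * Lterm (S m) r i - / (kappa * beta ^ m) * Lterm m r i
  <= / kappa ^ S m * (r ^ S i * / (1 - qk beta kappa ^ S i) ^ S m).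
Proof.
  intros Hb Hk Hr.
  assert (Hx : 0 < beta * INR (S i) / kappa)
    by (pose proof (INR_S_pos i); apply Rdiv_lt_0_compat; nra).
  rewrite qk_pow by lra.
  rewrite <- (Lterm_rescale_top m r beta kappa i Hb Hk),
    <- (Lterm_rescale_sub m r beta kappa i Hb Hk).
  pose proof (phi_lower m _ Hx) as Hp.
  set (y := / (beta * INR (S i) / kappa)) in *.
  assert (Hc : 0 <= / kappa ^ S m * r ^ S i).
  { apply Rmult_le_pos. left; apply Rinv_0_lt_compat, pow_lt; lra. apply pow_le; lra. }
  replace (/ kappa ^ S m * r ^ S i + / kappa ^ S m * (r ^ S i * y ^ S m)
           - / kappa ^ S m * (r ^ S i * y ^ m))
    with (/ kappa ^ S m * r ^ S i * (1 + y ^ S m - y ^ m)) by ring.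
  replace (/ kappa ^ S m * (r ^ S i * / (1 - exp (- (beta * INR (S i) / kappa))) ^ S m))
    with (/ kappa ^ S m * r ^ S i * / (1 - exp (- (beta * INR (S i) / kappa))) ^ S m) by ring.
  apply Rmult_le_compat_l; auto.
Qed.

Lemma trace_term_upper m beta kappa r i : 0 < beta -> 0 < kappa -> 0 <= r <= 1 ->
  / kappa ^ S m * (r ^ S i * / (1 - qk beta kappa ^ S i) ^ S m)
  <= / kappa ^ S m * r ^ S i + / beta ^ S m * Lterm (S m) r i
     + INR (S m) * 2 ^ m / (kappa * beta ^ m) * Lterm m r i
     + INR (S m) * 2 ^ S m / kappa ^ S m * qk beta kappa ^ S i.
Proof.
  intros Hb Hk Hr.
  assert (Hx : 0 < beta * INR (S i) / kappa)
    by (pose proof (INR_S_pos i); apply Rdiv_lt_0_compat; nra).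
  rewrite qk_pow by lra.
  rewrite <- (Lterm_rescale_top m r beta kappa i Hb Hk).
  replace (INR (S m) * 2 ^ m / (kappa * beta ^ m) * Lterm m r i)
    with (INR (S m) * 2 ^ m * (/ (kappa * beta ^ m) * Lterm m r i)) by (unfold Rdiv; ring).
  rewrite <- (Lterm_rescale_sub m r beta kappa i Hb Hk).
  pose proof (phi_upper m _ Hx) as Hp.
  set (x := beta * INR (S i) / kappa) in *.
  set (y := / x) in *.
  set (e := exp (- x)) in *.
  set (K := INR (S m) * 2 ^ S m).
  assert (HK : 0 <= K) by (apply Rmult_le_pos; [apply pos_INR| apply pow_le; lra]).
  assert (He : 0 <= e) by (left; apply exp_pos).
  assert (Hr1 : r ^ S i <= 1) by (apply pow_le1; lra).
  assert (Hik : 0 < / kappa ^ S m) by (apply Rinv_0_lt_compat, pow_lt; lra).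
  assert (Hc : 0 <= / kappa ^ S m * r ^ S i) by (apply Rmult_le_pos; [lra| apply pow_le; lra]).
  assert (Hmain : / kappa ^ S m * r ^ S i * / (1 - e) ^ S m
                  <= / kappa ^ S m * r ^ S i * (1 + y ^ S m + INR (S m) * 2 ^ m * y ^ m + K * e))
    by (apply Rmult_le_compat_l; auto).
  assert (Hexp : / kappa ^ S m * r ^ S i * (K * e) <= K / kappa ^ S m * e).
  { replace (K / kappa ^ S m * e) with (/ kappa ^ S m * 1 * (K * e)) by (unfold Rdiv; ring).
    apply Rmult_le_compat_r. nra. apply Rmult_le_compat_l; lra. }
  unfold K in *. lra.
Qed.

(* Summing the termwise bounds (here d = m + 1 >= 3, so Li_m(r) <= 2). *)
Lemma trace_lower m beta kappa r s : (2 <= m)%nat -> 0 < beta -> 0 < kappa -> 0 < r < 1 ->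
  infinite_sum (fun i => r ^ S i * / (1 - qk beta kappa ^ S i) ^ S m) s ->
  r / (kappa ^ S m * (1 - r)) + Li (S m) r / beta ^ S m - 2 / (kappa * beta ^ m)
  <= s / kappa ^ S m.
Proof.
  intros Hm Hb Hk Hr Hs.
  assert (Hkm : 0 < kappa ^ S m) by (apply pow_lt; lra).
  assert (Hbm : 0 < kappa * beta ^ m) by (apply Rmult_lt_0_compat; [|apply pow_lt]; lra).
  pose proof (isum_plus _ _ _ _
    (isum_plus _ _ _ _ (isum_scal (/ kappa ^ S m) _ _ (geom_sum1 r ltac:(lra)))
                       (isum_scal (/ beta ^ S m) _ _ (Li_spec (S m) r ltac:(lra))))
    (isum_scal (- / (kappa * beta ^ m)) _ _ (Li_spec m r ltac:(lra)))) as Hlow.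
  assert (Hle : / kappa ^ S m * (r / (1 - r)) + / beta ^ S m * Li (S m) r
                + - / (kappa * beta ^ m) * Li m r <= / kappa ^ S m * s).
  { eapply isum_le; [|exact Hlow| exact (isum_scal (/ kappa ^ S m) _ _ Hs)].
    intro i. pose proof (trace_term_lower m beta kappa r i Hb Hk ltac:(lra)). cbv beta. lra. }
  assert (HLm : Li m r <= 2) by (apply Li_le2; lia || lra).
  assert (/ (kappa * beta ^ m) * Li m r <= / (kappa * beta ^ m) * 2)
    by (apply Rmult_le_compat_l; [left; apply Rinv_0_lt_compat|]; lra).
  replace (r / (kappa ^ S m * (1 - r))) with (/ kappa ^ S m * (r / (1 - r))) by (field; lra).
  unfold Rdiv. lra.
Qed.

Lemma qk_bound beta kappa : 0 < beta -> 0 < kappa ->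
  0 < qk beta kappa < 1 /\ qk beta kappa / (1 - qk beta kappa) <= kappa / beta.
Proof.
  intros Hb Hk. set (t := beta / kappa). assert (Ht : 0 < t) by (apply Rdiv_lt_0_compat; lra).
  unfold qk. fold t.
  pose proof (exp_neg_lt1 t Ht) as Hq. split; auto.
  pose proof (exp_ineq1_le t). pose proof (exp_neg_mul_exp t).
  replace (kappa / beta) with (/ t) by (unfold t; field; lra).
  apply Rmult_le_reg_r with ((1 - exp (- t)) * t). apply Rmult_lt_0_compat; lra.
  replace (exp (- t) / (1 - exp (- t)) * ((1 - exp (- t)) * t)) with (exp (-t) * t) by (field; lra).
  replace (/ t * ((1 - exp (- t)) * t)) with (1 - exp (- t)) by (field; lra).
  nra.
Qed.

(* Upper bound by summing trace_term_upper; the remainder sum_i q^i/kappa^d is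
   at most 1/(beta kappa^(d-1)). *)
Lemma trace_upper m beta kappa r s : (2 <= m)%nat -> 0 < beta -> 1 <= kappa -> 0 < r < 1 ->
  infinite_sum (fun i => r ^ S i * / (1 - qk beta kappa ^ S i) ^ S m) s ->
  s / kappa ^ S m <= r / (kappa ^ S m * (1 - r)) + Li (S m) r / beta ^ S m
     + 2 * INR (S m) * 2 ^ m / (kappa * beta ^ m) + INR (S m) * 2 ^ S m / beta / kappa.
Proof.
  intros Hm Hb Hk Hr Hs.
  destruct (qk_bound beta kappa Hb ltac:(lra)) as [Hq Hqb].
  set (q := qk beta kappa) in *.
  assert (Hkm : 0 < kappa ^ m) by (apply pow_lt; lra).
  assert (HkS : kappa ^ S m = kappa * kappa ^ m) by reflexivity.
  assert (Hbm : 0 < kappa * beta ^ m) by (apply Rmult_lt_0_compat; [|apply pow_lt]; lra).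
  set (c3 := INR (S m) * 2 ^ m / (kappa * beta ^ m)).
  set (K := INR (S m) * 2 ^ S m).
  assert (HK : 0 <= K) by (apply Rmult_le_pos; [apply pos_INR| apply pow_le; lra]).
  pose proof (isum_plus _ _ _ _
    (isum_plus _ _ _ _
      (isum_plus _ _ _ _ (isum_scal (/ kappa ^ S m) _ _ (geom_sum1 r ltac:(lra)))
                         (isum_scal (/ beta ^ S m) _ _ (Li_spec (S m) r ltac:(lra))))
      (isum_scal c3 _ _ (Li_spec m r ltac:(lra))))
    (isum_scal (K / kappa ^ S m) _ _ (geom_sum1 q ltac:(lra)))) as Hup.
  assert (Hle : / kappa ^ S m * s <= / kappa ^ S m * (r / (1 - r)) + / beta ^ S m * Li (S m) r
                 + c3 * Li m r + K / kappa ^ S m * (q / (1 - q))).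
  { eapply isum_le; [| exact (isum_scal (/ kappa ^ S m) _ _ Hs) | exact Hup].
    intro i. pose proof (trace_term_upper m beta kappa r i Hb ltac:(lra) ltac:(lra)). cbv beta.
    fold q c3 K in H. lra. }
  assert (Hc3 : c3 * Li m r <= 2 * INR (S m) * 2 ^ m / (kappa * beta ^ m)).
  { assert (Li m r <= 2) by (apply Li_le2; lia || lra).
    assert (0 <= c3).
    { unfold c3, Rdiv. apply Rmult_le_pos. apply Rmult_le_pos. apply pos_INR. apply pow_le; lra.
      left; apply Rinv_0_lt_compat; lra. }
    unfold c3 in *. unfold Rdiv in *. nra. }
  assert (Hkm1 : kappa <= kappa ^ m).
  { destruct m; [lia|]. simpl. rewrite <- (Rmult_1_r kappa) at 1.
    apply Rmult_le_compat_l; [lra|]. apply pow_ge1; lra. }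
  assert (Hgeo : K / kappa ^ S m * (q / (1 - q)) <= K / beta / kappa).
  { apply Rle_trans with (K / kappa ^ S m * (kappa / beta)).
    apply Rmult_le_compat_l; auto. unfold Rdiv. apply Rmult_le_pos; auto.
    left; apply Rinv_0_lt_compat; rewrite HkS; nra.
    rewrite HkS. replace (K / (kappa * kappa ^ m) * (kappa / beta)) with (K / beta * / kappa ^ m)
      by (field; lra).
    unfold Rdiv at 2. apply Rmult_le_compat_l. unfold Rdiv; apply Rmult_le_pos; auto.
    left; apply Rinv_0_lt_compat; lra.
    apply Rinv_le_contravar; lra. }
  replace (r / (kappa ^ S m * (1 - r))) with (/ kappa ^ S m * (r / (1 - r)))
    by (field; split; [lra| rewrite HkS; nra]).
  replace (s / kappa ^ S m) with (/ kappa ^ S m * s) by (unfold Rdiv; ring).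
  replace (Li (S m) r / beta ^ S m) with (/ beta ^ S m * Li (S m) r) by (unfold Rdiv; ring).
  unfold K in *. lra.
Qed.

Definition Cb (d : nat) (beta : R) : R :=
  2 * (INR d * 2 ^ (d - 1) + 1) / beta ^ (d - 1) + INR d * 2 ^ d / beta.

Lemma Cb_pos d beta : 0 < beta -> 0 < Cb d beta.
Proof.
  intro Hb. unfold Cb. pose proof (pos_INR d).
  assert (0 < 2 ^ (d-1)) by (apply pow_lt; lra). assert (0 < 2 ^ d) by (apply pow_lt; lra).
  assert (0 < beta ^ (d-1)) by (apply pow_lt; lra).
  apply Rplus_lt_le_0_compat. apply Rdiv_lt_0_compat; nra.
  unfold Rdiv; apply Rmult_le_pos. nra. left; apply Rinv_0_lt_compat; lra.
Qed.

Lemma trace_bounds d beta kappa r s : (3 <= d)%nat -> 0 < beta -> 1 <= kappa -> 0 < r < 1 ->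
  TraceVal d beta kappa r s ->
  r / (kappa ^ d * (1 - r)) + Li d r / beta ^ d - Cb d beta / kappa <= s / kappa ^ d /\
  s / kappa ^ d <= r / (kappa ^ d * (1 - r)) + Li d r / beta ^ d + Cb d beta / kappa.
Proof.
  intros Hd Hb Hk Hr HT.
  pose proof (trace_closed d beta kappa r s Hb ltac:(lra) Hr HT) as Hs.
  destruct d as [|m]; [lia|].
  pose proof (trace_lower m beta kappa r s ltac:(lia) Hb ltac:(lra) Hr Hs).
  pose proof (trace_upper m beta kappa r s ltac:(lia) Hb Hk Hr Hs).
  assert (Hbm : 0 < beta ^ m) by (apply pow_lt; lra).
  assert (HCb : Cb (S m) beta / kappa = 2 * INR (S m) * 2 ^ m / (kappa * beta ^ m)
                  + 2 / (kappa * beta ^ m) + INR (S m) * 2 ^ S m / beta / kappa).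
  { unfold Cb. replace (S m - 1)%nat with m by lia. field. lra. }
  assert (0 <= 2 * INR (S m) * 2 ^ m / (kappa * beta ^ m)).
  { unfold Rdiv. apply Rmult_le_pos. apply Rmult_le_pos. pose proof (pos_INR (S m)); lra.
    apply pow_le; lra. left; apply Rinv_0_lt_compat; nra. }
  assert (0 <= 2 / (kappa * beta ^ m))
    by (unfold Rdiv; apply Rmult_le_pos; [lra| left; apply Rinv_0_lt_compat; nra]).
  assert (0 <= INR (S m) * 2 ^ S m / beta / kappa).
  { unfold Rdiv. apply Rmult_le_pos. apply Rmult_le_pos. apply Rmult_le_pos.
    apply pos_INR. apply pow_le; lra. left; apply Rinv_0_lt_compat; lra.
    left; apply Rinv_0_lt_compat; lra. }
  lra.
Qed.

(* A_kappa = r_kappa/(kappa^d(1-r_kappa)), the rescaled occupation of the ground state. *)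
Definition Akappa (d : nat) (r : R -> R) (kappa : R) : R := r kappa / (kappa ^ d * (1 - r kappa)).

(* The key estimate: |mu/lambda - F(r_kappa) - A_kappa| <= C/kappa, obtained by
   taking logarithms in the self-consistency equation. *)
Lemma fugacity_estimate d beta lambda mu r kappa : (3 <= d)%nat -> 0 < beta -> 0 < lambda ->
  IsRkappa d beta lambda mu r -> 1 <= kappa ->
  0 < r kappa < 1 /\
  mu / lambda - Cb d beta / kappa <= Fn d beta lambda (r kappa) + Akappa d r kappa /\
  Fn d beta lambda (r kappa) + Akappa d r kappa <= mu / lambda + Cb d beta / kappa.
Proof.
  intros Hd Hb Hl HR Hk.
  destruct (HR kappa Hk) as [Hr [s [HT Hexp]]].
  split; auto.
  pose proof (trace_bounds d beta kappa (r kappa) s Hd Hb Hk Hr HT) as [H1 H2].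
  assert (Hln : ln (r kappa) = beta * mu - beta * lambda * s / kappa ^ d)
    by (rewrite Hexp; apply ln_exp).
  assert (Hk0 : 0 < kappa ^ d) by (apply pow_lt; lra).
  assert (Hs : s / kappa ^ d = mu / lambda - ln (r kappa) / (beta * lambda))
    by (rewrite Hln; field; repeat split; lra).
  unfold Fn, Akappa. lra.
Qed.

Lemma cv_unique f l1 l2 : cv_at_infty f l1 -> cv_at_infty f l2 -> l1 = l2.
Proof.
  intros H1 H2. destruct (Req_dec l1 l2) as [|Hne]; auto.
  set (e := Rabs (l1 - l2) / 2).
  assert (He : 0 < e) by (unfold e; apply Rdiv_lt_0_compat; [apply Rabs_pos_lt; lra| lra]).
  destruct (H1 e He) as [M1 HM1]. destruct (H2 e He) as [M2 HM2].
  specialize (HM1 (Rmax M1 M2) (Rmax_l _ _)). specialize (HM2 (Rmax M1 M2) (Rmax_r _ _)).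
  exfalso. unfold e in *.
  pose proof (Rabs_triang (l1 - f (Rmax M1 M2)) (f (Rmax M1 M2) - l2)).
  replace (l1 - f (Rmax M1 M2) + (f (Rmax M1 M2) - l2)) with (l1 - l2) in H by ring.
  rewrite <- Rabs_Ropp in HM1.
  replace (- (f (Rmax M1 M2) - l1)) with (l1 - f (Rmax M1 M2)) in HM1 by ring.
  lra.
Qed.

Lemma plus_infty_not_cv f l : to_plus_infty f -> ~ cv_at_infty f l.
Proof.
  intros H1 H2. destruct (H2 1 ltac:(lra)) as [M1 HM1]. destruct (H1 (l + 1)) as [M2 HM2].
  specialize (HM1 (Rmax M1 M2) (Rmax_l _ _)). specialize (HM2 (Rmax M1 M2) (Rmax_r _ _)).
  apply Rabs_def2 in HM1. lra.
Qed.

Lemma cv_at_infty_ext f g l M : (forall k, M <= k -> f k = g k) ->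
  cv_at_infty f l -> cv_at_infty g l.
Proof.
  intros E H eps He. destruct (H eps He) as [M1 HM1]. exists (Rmax M M1). intros k Hk.
  pose proof (Rmax_l M M1). pose proof (Rmax_r M M1). rewrite <- E by lra. apply HM1; lra.
Qed.

Lemma to_plus_infty_ext f g M : (forall k, M <= k -> f k = g k) ->
  to_plus_infty f -> to_plus_infty g.
Proof.
  intros E H A0. destruct (H A0) as [M1 HM1]. exists (Rmax M M1). intros k Hk.
  pose proof (Rmax_l M M1). pose proof (Rmax_r M M1). rewrite <- E by lra. apply HM1; lra.
Qed.

Lemma cv_div_limit f g L : cv_at_infty f 1 -> cv_at_infty g L -> 0 < L ->
  cv_at_infty (fun k => f k / g k) (/ L).
Proof.
  intros Hf Hg HL eps He.
  assert (He1 : 0 < eps * L / 4) by (apply Rdiv_lt_0_compat; nra).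
  assert (He2 : 0 < Rmin (L / 2) (eps * L * L / 4))
    by (apply Rmin_glb_lt; [lra| apply Rdiv_lt_0_compat; [apply Rmult_lt_0_compat; nra| lra]]).
  destruct (Hf _ He1) as [M1 HM1]. destruct (Hg _ He2) as [M2 HM2].
  exists (Rmax M1 M2). intros k Hk.
  pose proof (Rmax_l M1 M2). pose proof (Rmax_r M1 M2).
  pose proof (Rmin_l (L / 2) (eps * L * L / 4)). pose proof (Rmin_r (L / 2) (eps * L * L / 4)).
  specialize (HM1 k ltac:(lra)). specialize (HM2 k ltac:(lra)).
  apply Rabs_def2 in HM1. apply Rabs_def2 in HM2.
  set (F := f k) in *. set (G := g k) in *.
  assert (HG : L / 2 < G) by lra.
  assert (E : F / G - / L = (F * L - G) / (G * L)) by (field; lra).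
  rewrite E. apply Rabs_def1.
  - apply Rmult_lt_reg_r with (G * L). nra. unfold Rdiv. rewrite Rmult_assoc, Rinv_l by nra. nra.
  - apply Rmult_lt_reg_r with (G * L). nra. unfold Rdiv. rewrite Rmult_assoc, Rinv_l by nra. nra.
Qed.

Lemma cv_div_infty f g M : cv_at_infty f 1 -> cv_at_infty g 0 -> (forall k, M <= k -> 0 < g k) ->
  to_plus_infty (fun k => f k / g k).
Proof.
  intros Hf Hg Hpos A0.
  set (e := / (2 * (Rabs A0 + 1))).
  pose proof (Rabs_pos A0). pose proof (Rle_abs A0).
  assert (He : 0 < e) by (apply Rinv_0_lt_compat; lra).
  destruct (Hf (1/2) ltac:(lra)) as [M1 HM1]. destruct (Hg e He) as [M2 HM2].
  exists (Rmax M (Rmax M1 M2)). intros k Hk.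
  pose proof (Rmax_l M (Rmax M1 M2)). pose proof (Rmax_r M (Rmax M1 M2)).
  pose proof (Rmax_l M1 M2). pose proof (Rmax_r M1 M2).
  specialize (HM1 k ltac:(lra)). specialize (HM2 k ltac:(lra)). specialize (Hpos k ltac:(lra)).
  apply Rabs_def2 in HM1. apply Rabs_def2 in HM2.
  assert (Hq : (1 / 2) / e = Rabs A0 + 1) by (unfold e; field; lra).
  assert ((1 / 2) / e < f k / g k).
  { unfold Rdiv. apply Rle_lt_trans with (f k * / e).
    apply Rmult_le_compat_r. left; apply Rinv_0_lt_compat; lra. lra.
    apply Rmult_lt_compat_l. lra. apply Rinv_lt_contravar; nra. }
  lra.
Qed.

Lemma pow_ge_self k d : 1 <= k -> (1 <= d)%nat -> k <= k ^ d.
Proof.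
  intros Hk Hd. destruct d; [lia|]. simpl. rewrite <- (Rmult_1_r k) at 1.
  apply Rmult_le_compat_l; [lra|]. apply pow_ge1; lra.
Qed.

Lemma cv_lt1_diverges d f l : (1 <= d)%nat -> l < 1 -> cv_at_infty f l ->
  to_plus_infty (fun kappa => kappa ^ d * (1 - f kappa)).
Proof.
  intros Hd Hl Hcv A0.
  destruct (Hcv ((1 - l) / 2) ltac:(lra)) as [M HM].
  set (B := 2 * Rabs A0 / (1 - l) + 1).
  exists (Rmax (Rmax M 1) B). intros kappa Hk.
  pose proof (Rmax_l (Rmax M 1) B). pose proof (Rmax_r (Rmax M 1) B).
  pose proof (Rmax_l M 1). pose proof (Rmax_r M 1).
  specialize (HM kappa ltac:(lra)). apply Rabs_def2 in HM.
  pose proof (pow_ge_self kappa d ltac:(lra) Hd).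
  assert (Hx1 : kappa * ((1 - l) / 2) <= kappa ^ d * (1 - f kappa))
    by (apply Rmult_le_compat; lra).
  assert (Hx2 : Rabs A0 < kappa * ((1 - l) / 2)).
  { assert (2 * Rabs A0 / (1 - l) < kappa) by (unfold B in *; lra).
    apply Rmult_lt_reg_r with (2 / (1 - l)). apply Rdiv_lt_0_compat; lra.
    replace (kappa * ((1 - l) / 2) * (2 / (1 - l))) with kappa by (field; lra).
    replace (Rabs A0 * (2 / (1 - l))) with (2 * Rabs A0 / (1 - l)) by (field; lra). lra. }
  pose proof (Rle_abs A0). lra.
Qed.

Lemma inv_kappa_small K eps : 0 <= K -> 0 < eps ->
  exists M, 1 <= M /\ forall kappa, M <= kappa -> K / kappa < eps.
Proof.
  intros HK He. exists (Rmax 1 (K / eps + 1)). split; [apply Rmax_l|].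
  intros kappa Hk. pose proof (Rmax_l 1 (K / eps + 1)). pose proof (Rmax_r 1 (K / eps + 1)).
  assert (K / eps * eps = K) by (field; lra).
  apply Rmult_lt_reg_r with kappa. lra. unfold Rdiv in *. rewrite Rmult_assoc, Rinv_l by lra.
  nra.
Qed.

(* The key identity
   is d/dx Li_{m+1}(y e^{-x}) = -Li_m(y e^{-x}), so integrating Li_m(y e^{-x})
   over [0,oo) gives Li_{m+1}(y); iterating d times starts from
   Li_0(y e^{-t}) = y/(e^t - y). *)

Lemma FTC_gen f g a b (pr : Riemann_integrable f a b) : a <= b ->
  (forall x, a <= x <= b -> continuity_pt f x) ->
  (forall x, a <= x <= b -> derivable_pt_lim g x (f x)) ->
  RiemannInt pr = g b - g a.
Proof.
  intros h C0 D.
  rewrite (RiemannInt_P20 h (FTC_P1 h C0) pr).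
  assert (H1 := RiemannInt_P29 h C0).
  assert (H2 : antiderivative f g a b).
  { split; auto. intros x Hx. exists (exist _ (f x) (D x Hx)). reflexivity. }
  destruct (antiderivative_Ucte f _ _ _ _ H1 H2) as [C HC].
  rewrite !HC by lra. ring.
Qed.

Lemma yexp_bounds y x : 0 < y < 1 -> ln y < x -> 0 < y * exp (- x) < 1.
Proof.
  intros Hy Hx. split. apply Rmult_lt_0_compat. lra. apply exp_pos.
  replace 1 with (y * exp (- ln y)). apply Rmult_lt_compat_l. lra. apply exp_increasing. lra.
  rewrite exp_Ropp, exp_ln by lra. field. lra.
Qed.

Lemma cont_yexp m y x : 0 < y < 1 -> ln y < x ->
  continuity_pt (fun x => Li m (y * exp (- x))) x.
Proof.
  intros Hy Hx.
  apply (continuity_pt_comp (fun x => y * exp (- x)) (Li m)).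
  - apply derivable_continuous_pt. exists (y * (exp (- x) * -1)).
    apply derivable_pt_lim_scal.
    apply (derivable_pt_lim_comp Ropp exp). apply derivable_pt_lim_opp. apply derivable_pt_lim_id.
    apply derivable_pt_lim_exp.
  - apply Li_continuous. apply yexp_bounds; auto.
Qed.

Lemma dexp_lin a x : derivable_pt_lim (fun x => exp (a * x)) x (exp (a * x) * a).
Proof.
  apply (derivable_pt_lim_comp (fun x => a * x) exp).
  pose proof (derivable_pt_lim_scal (fun x => x) a x 1 (derivable_pt_lim_id x)) as H.
  rewrite Rmult_1_r in H. exact H.
  apply derivable_pt_lim_exp.
Qed.

Lemma yexp_pow y x i : (y * exp (- x)) ^ S i = y ^ S i * exp (- INR (S i) * x).
Proof. rewrite Rpow_mult_distr. f_equal. rewrite <- exp_INR_mult. f_equal. ring. Qed.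

Lemma term_deriv m y i x :
  derivable_pt_lim (fun x => Lterm (S m) (y * exp (- x)) i) x (- Lterm m (y * exp (- x)) i).
Proof.
  set (K := y ^ S i / INR (S i) ^ S m).
  set (a := - INR (S i)).
  pose proof (INR_S_pos i) as HS.
  replace (fun x => Lterm (S m) (y * exp (- x)) i) with (fun x => K * exp (a * x)).
  2: { apply functional_extensionality. intro t. unfold Lterm, K, a. rewrite yexp_pow.
       unfold Rdiv. ring. }
  replace (- Lterm m (y * exp (- x)) i) with (K * (exp (a * x) * a)).
  apply (derivable_pt_lim_scal (fun x => exp (a * x))). apply dexp_lin.
  unfold Lterm, K, a. rewrite yexp_pow.
  change (INR (S i) ^ S m) with (INR (S i) * INR (S i) ^ m).
  field. split. apply pow_nonzero; lra. lra.
Qed.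

Lemma psum_deriv m y n x :
  derivable_pt_lim (fun x => sum_f_R0 (fun i => Lterm (S m) (y * exp (- x)) i) n) x
    (sum_f_R0 (fun i => - Lterm m (y * exp (- x)) i) n).
Proof.
  induction n.
  - simpl. apply term_deriv.
  - simpl.
    apply (derivable_pt_lim_plus
             (fun x => sum_f_R0 (fun i => Lterm (S m) (y * exp (- x)) i) n)
             (fun x => Lterm (S m) (y * exp (- x)) (S n))); auto.
    apply term_deriv.
Qed.

(* Uniform tail bound on [0, rho], giving uniform convergence of the derivatives. *)
Lemma Li_tail m z rho n : 0 <= z <= rho -> rho < 1 ->
  Li m z - sum_f_R0 (Lterm m z) n <= rho ^ S (S n) / (1 - rho).
Proof.
  intros Hz Hr.
  assert (H1 : infinite_sum (fun i => rho ^ S i + -1 * Lterm m z i)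
                            (rho / (1 - rho) + -1 * Li m z)).
  { apply isum_plus. apply geom_sum1; lra. apply isum_scal. apply Li_spec; lra. }
  assert (Hpos : forall i, 0 <= rho ^ S i + -1 * Lterm m z i).
  { intro i. pose proof (Lterm_bounds m z i ltac:(lra)).
    assert (z ^ S i <= rho ^ S i) by (apply pow_incr; lra). lra. }
  pose proof (isum_le_lim _ _ n Hpos H1) as H2.
  rewrite plus_sum in H2. rewrite sum_scal_l in H2.
  assert (E : sum_f_R0 (fun i => rho ^ S i) n = rho * (1 - rho ^ S n) / (1 - rho)).
  { replace (rho * (1 - rho ^ S n) / (1 - rho)) with (rho * ((1 - rho ^ S n) / (1 - rho)))
      by (unfold Rdiv; ring).
    rewrite <- (tech3 rho n) by lra. rewrite <- sum_scal_l.
    apply sum_f_R0_ext. intro; simpl; ring. }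
  rewrite E in H2.
  replace (rho ^ S (S n) / (1 - rho)) with (rho / (1 - rho) - rho * (1 - rho ^ S n) / (1 - rho))
    by (simpl; field; lra).
  lra.
Qed.

Lemma Li_shift_deriv m y x0 : 0 < y < 1 -> ln y < x0 ->
  derivable_pt_lim (fun x => Li (S m) (y * exp (- x))) x0 (- Li m (y * exp (- x0))).
Proof.
  intros Hy Hx0.
  assert (Hdp : 0 < (x0 - ln y) / 2) by lra.
  set (dl := mkposreal _ Hdp).
  set (rho := y * exp (- (x0 - (x0 - ln y) / 2))).
  assert (Hrho : 0 < rho < 1) by (apply yexp_bounds; lra).
  assert (Hball : forall x, Boule x0 dl x -> 0 < y * exp (- x) <= rho).
  { intros x Hx. unfold Boule in Hx. simpl in Hx. apply Rabs_def2 in Hx.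
    split. apply Rmult_lt_0_compat. lra. apply exp_pos.
    unfold rho. apply Rmult_le_compat_l. lra. left; apply exp_increasing. lra. }
  apply (CVU_derivable
     (fun n x => sum_f_R0 (fun i => Lterm (S m) (y * exp (- x)) i) n)
     (fun n x => sum_f_R0 (fun i => - Lterm m (y * exp (- x)) i) n)
     (fun x => Li (S m) (y * exp (- x)))
     (fun x => - Li m (y * exp (- x))) x0 dl).
  - intros eps He.
    destruct (pow_lt_1_zero rho ltac:(rewrite Rabs_right; lra) (eps * (1 - rho)) ltac:(nra))
      as [N HN].
    exists N. intros n x Hn Hx. specialize (Hball x Hx).
    assert (E : sum_f_R0 (fun i => - Lterm m (y * exp (- x)) i) n
                = - sum_f_R0 (Lterm m (y * exp (- x))) n).
    { clear. induction n; simpl; [ring| rewrite IHn; ring]. }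
    rewrite E.
    pose proof (Li_tail m (y * exp (- x)) rho n ltac:(lra) ltac:(lra)).
    assert (sum_f_R0 (Lterm m (y * exp (- x))) n <= Li m (y * exp (- x))).
    { apply isum_le_lim. intro i; apply Lterm_bounds; lra. apply Li_spec; lra. }
    specialize (HN (S (S n)) ltac:(lia)). rewrite Rabs_right in HN by (apply Rle_ge, pow_le; lra).
    assert (rho ^ S (S n) / (1 - rho) < eps).
    { apply Rmult_lt_reg_r with (1 - rho). lra.
      unfold Rdiv. rewrite Rmult_assoc, Rinv_l by lra. lra. }
    rewrite Rabs_left1 by lra. lra.
  - intros x Hx. specialize (Hball x Hx). apply (Li_spec (S m) (y * exp (- x))). lra.
  - intros n x Hx. apply psum_deriv.
  - apply Boule_center.
Qed.

Lemma Rmax0_cont x : continuity_pt (fun x => Rmax 0 x) x.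
Proof.
  unfold continuity_pt, continue_in, limit1_in, limit_in. simpl. unfold Rdist.
  intros eps He. exists eps. split; auto. intros z [_ Hz].
  apply Rle_lt_trans with (Rabs (z - x)); auto.
  unfold Rmax. destruct (Rle_dec 0 z), (Rle_dec 0 x); unfold Rabs; repeat destruct Rcase_abs; lra.
Qed.

(* y e^{-x} decays like 1/(1+x), hence so does Li_k(y e^{-x}) <= z/(1-z). *)
Lemma Li_decay k y T : 0 < y < 1 -> 1 <= T -> 0 <= Li k (y * exp (- T)) <= 2 / (1 + T).
Proof.
  intros Hy HT.
  set (z := y * exp (- T)).
  assert (Hz : 0 < z < 1) by (apply yexp_bounds; auto; pose proof (ln_lt0 y Hy); lra).
  pose proof (Li_bounds k z ltac:(lra)) as [Hz1 Hz2].
  assert (HzT : z * (1 + T) <= 1).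
  { unfold z. pose proof (exp_ineq1_le T). pose proof (exp_neg_mul_exp T).
    pose proof (exp_pos (- T)).
    assert (exp (- T) * (1 + T) <= 1) by nra.
    nra. }
  assert (z / (1 - z) <= 2 * z).
  { apply Rmult_le_reg_r with (1 - z). lra. unfold Rdiv. rewrite Rmult_assoc, Rinv_l by lra. nra. }
  split; auto.
  apply Rle_trans with (2 * z); [lra|].
  apply Rmult_le_reg_r with (1 + T). lra.
  replace (2 / (1 + T) * (1 + T)) with 2 by (field; lra). lra.
Qed.

Lemma integral_Li_shift m y T (pr : Riemann_integrable (fun x => Li m (y * exp (- x))) 0 T) :
  0 < y < 1 -> 0 <= T -> RiemannInt pr = Li (S m) y - Li (S m) (y * exp (- T)).
Proof.
  intros Hy HT. pose proof (ln_lt0 y Hy).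
  rewrite (FTC_gen _ (fun x => - Li (S m) (y * exp (- x))) 0 T pr HT).
  - rewrite Ropp_0, exp_0, Rmult_1_r. ring.
  - intros x Hx. apply cont_yexp; auto. lra.
  - intros x Hx. replace (Li m (y * exp (- x))) with (- - Li m (y * exp (- x))) by ring.
    apply (derivable_pt_lim_opp (fun x => Li (S m) (y * exp (- x)))).
    apply Li_shift_deriv; auto. lra.
Qed.

(* The integrand is extended to the left of 0 by its value at 0, so that it is
   continuous, hence Riemann integrable on every [0, T]. *)
Lemma improper_Li m y : 0 < y < 1 ->
  ImproperInt0 (fun x => Li m (y * exp (- Rmax 0 x))) (Li (S m) y).
Proof.
  intros Hy.
  assert (Hln : ln y < 0) by (apply ln_lt0; lra).
  assert (Hcont : forall x, continuity_pt (fun x => Li m (y * exp (- Rmax 0 x))) x).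
  { intro x. apply (continuity_pt_comp (fun x => Rmax 0 x) (fun u => Li m (y * exp (- u)))).
    apply Rmax0_cont. apply cont_yexp; auto. pose proof (Rmax_l 0 x). lra. }
  assert (pr : forall T, Riemann_integrable (fun x => Li m (y * exp (- Rmax 0 x))) 0 T).
  { intro T. destruct (Rle_dec 0 T).
    - apply continuity_implies_RiemannInt; auto.
    - apply RiemannInt_P1. apply continuity_implies_RiemannInt; auto. lra. }
  exists pr. intros eps He.
  exists (Rmax 1 (2 / eps)). intros T HT.
  pose proof (Rmax_l 1 (2 / eps)). pose proof (Rmax_r 1 (2 / eps)).
  assert (pr0 : Riemann_integrable (fun x => Li m (y * exp (- x))) 0 T).
  { apply continuity_implies_RiemannInt. lra. intros x Hx. apply cont_yexp; auto. lra. }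
  rewrite (RiemannInt_P18 (pr T) pr0)
    by (try lra; intros x Hx; rewrite Rmax_right by lra; reflexivity).
  rewrite (integral_Li_shift m y T pr0 Hy ltac:(lra)).
  pose proof (Li_decay (S m) y T Hy ltac:(lra)).
  assert (2 / (1 + T) < eps).
  { apply Rmult_lt_reg_r with (1 + T). lra. unfold Rdiv. rewrite Rmult_assoc, Rinv_l by lra.
    assert (2 / eps * eps = 2) by (field; lra). nra. }
  rewrite Rabs_left1; lra.
Qed.

Lemma orthant_unique d : forall F l1 l2, OrthantInt d F l1 -> OrthantInt d F l2 -> l1 = l2.
Proof.
  induction d; intros F l1 l2 H1 H2.
  - simpl in *. congruence.
  - simpl in *. destruct H1 as [G1 [HG1 [pr1 HI1]]]. destruct H2 as [G2 [HG2 [pr2 HI2]]].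
    apply cv_unique with (fun T => RiemannInt (pr2 T)); [|exact HI2].
    apply cv_at_infty_ext with (fun T => RiemannInt (pr1 T)) 0; [|exact HI1].
    intros T HT. apply RiemannInt_P18; auto. intros x Hx.
    apply (IHd (fun t => F (x + t))); [apply HG1| apply HG2]; lra.
Qed.

Lemma orthant_ext d : forall F F' l,
  OrthantInt d F l -> (forall t, 0 <= t -> F t = F' t) -> OrthantInt d F' l.
Proof.
  induction d; intros F F' l H HF.
  - simpl in *. rewrite H. apply HF. lra.
  - simpl in *. destruct H as [G [HG HI]]. exists G. split; auto.
    intros x Hx. apply (IHd (fun t => F (x + t))). apply HG; auto. intros t Ht. apply HF. lra.
Qed.

(* Integrating out one coordinate raises the index of the polylogarithm by one. *)
Lemma orthant_gen n : forall k y, 0 < y < 1 ->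
  OrthantInt n (fun t => Li k (y * exp (- t))) (Li (k + n) y).
Proof.
  induction n; intros k y Hy.
  - simpl. rewrite Nat.add_0_r, Ropp_0, exp_0, Rmult_1_r. reflexivity.
  - simpl. exists (fun x => Li (k + n) (y * exp (- Rmax 0 x))). split.
    + intros x Hx. rewrite Rmax_right by lra.
      assert (Hy' : 0 < y * exp (- x) < 1)
        by (apply yexp_bounds; auto; pose proof (ln_lt0 y Hy); lra).
      replace (fun t => Li k (y * exp (- (x + t))))
        with (fun t => Li k (y * exp (- x) * exp (- t))).
      apply IHn; auto.
      apply functional_extensionality. intro t.
      rewrite Ropp_plus_distr, exp_plus, Rmult_assoc. reflexivity.
    + rewrite Nat.add_succ_r. apply improper_Li; auto.
Qed.

(* Since Li_0(y e^{-t}) = y/(e^t - y), the orthant integral of y/(e^{|p|_1} - y) is Li_d(y). *)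
Lemma orthant_Li d y : 0 < y < 1 -> OrthantInt d (fun t => y / (exp t - y)) (Li d y).
Proof.
  intro Hy. apply orthant_ext with (fun t => Li 0 (y * exp (- t))).
  - apply (orthant_gen d 0 y Hy).
  - intros t Ht.
    assert (Hz : 0 < y * exp (- t) < 1)
      by (apply yexp_bounds; auto; pose proof (ln_lt0 y Hy); lra).
    rewrite Li_0 by lra.
    pose proof (exp_neg_mul_exp t).
    assert (exp t - y <> 0).
    { intro H0. assert (y * exp (- t) = 1) by (replace y with (exp t) by lra; lra). lra. }
    rewrite exp_Ropp. pose proof (exp_pos t). field. split; lra.
Qed.

Lemma LimitEq_iff d beta lambda mu t : 0 < beta -> 0 < lambda -> 0 < t < 1 ->
  (LimitEq d beta lambda mu t <-> mu / lambda = Fn d beta lambda t).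
Proof.
  intros Hb Hl Ht. unfold LimitEq, Fn. split.
  - intros [I [HI Heq]]. rewrite (orthant_unique d _ _ _ HI (orthant_Li d t Ht)) in Heq. auto.
  - intro H. exists (Li d t). split; auto. apply orthant_Li; auto.
Qed.

Section Regimes.

Variables (d : nat) (beta lambda mu zeta : R) (r : R -> R).
Hypothesis Hd : (3 <= d)%nat.
Hypothesis Hb : 0 < beta.
Hypothesis Hl : 0 < lambda.
Hypothesis HZ : ZetaVal d zeta.
Hypothesis HR : IsRkappa d beta lambda mu r.

Local Notation F := (Fn d beta lambda).
Local Notation cmu := (mu / lambda).
Local Notation Zc := (zeta / beta ^ d).
Local Notation C := (Cb d beta).
Local Notation A := (Akappa d r).

Lemma estimate kappa : 1 <= kappa ->
  0 < r kappa < 1 /\ cmu - C / kappa <= F (r kappa) + A kappa /\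
  F (r kappa) + A kappa <= cmu + C / kappa.
Proof. apply fugacity_estimate; auto. Qed.

Lemma C_pos : 0 < C.
Proof. apply Cb_pos; auto. Qed.

Lemma A_pos kappa : 1 <= kappa -> 0 < A kappa.
Proof.
  intro Hk. destruct (estimate kappa Hk) as [Hr _]. pose proof (pow_lt kappa d ltac:(lra)).
  unfold Akappa. apply Rdiv_lt_0_compat; nra.
Qed.

Lemma A_small kappa rho : 1 <= kappa -> r kappa <= rho -> rho < 1 ->
  A kappa <= rho / (kappa * (1 - rho)).
Proof.
  intros Hk Hr Hrho. destruct (estimate kappa Hk) as [Hr0 _].
  pose proof (pow_ge_self kappa d Hk ltac:(lia)).
  unfold Akappa, Rdiv. apply Rle_trans with (rho * / (kappa ^ d * (1 - r kappa))).
  apply Rmult_le_compat_r. left; apply Rinv_0_lt_compat; nra. lra.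
  apply Rmult_le_compat_l. lra. apply Rinv_le_contravar. nra.
  apply Rmult_le_compat; lra.
Qed.

(* Since
   F is increasing and A >= 0, r_kappa cannot stay above rs + e, and since A is
   O(1/kappa) below 1 it cannot stay below rs - e either. *)
Lemma sub_cv rs : 0 < rs < 1 -> F rs = cmu -> cv_at_infty r rs.
Proof.
  intros Hrs HFrs eps He.
  set (e := Rmin (eps / 2) (Rmin (rs / 2) ((1 - rs) / 2))).
  assert (He1 : 0 < e /\ e <= eps / 2 /\ e <= rs / 2 /\ e <= (1 - rs) / 2).
  { unfold e. pose proof (Rmin_l (eps / 2) (Rmin (rs / 2) ((1 - rs) / 2))).
    pose proof (Rmin_r (eps / 2) (Rmin (rs / 2) ((1 - rs) / 2))).
    pose proof (Rmin_l (rs / 2) ((1 - rs) / 2)). pose proof (Rmin_r (rs / 2) ((1 - rs) / 2)).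
    split; [|lra]. apply Rmin_glb_lt. lra. apply Rmin_glb_lt; lra. }
  set (rho := rs + e).
  assert (Erho : rho = rs + e) by reflexivity.
  assert (Hrho : 0 < rho < 1) by lra.
  assert (Hg1 : cmu < F rho) by (rewrite <- HFrs; apply Fn_strict; lra).
  assert (Hg2 : F (rs - e) < cmu) by (rewrite <- HFrs; apply Fn_strict; lra).
  set (g := Rmin (F rho - cmu) (cmu - F (rs - e))).
  assert (Hg : 0 < g /\ g <= F rho - cmu /\ g <= cmu - F (rs - e)).
  { unfold g. split. apply Rmin_glb_lt; lra. split. apply Rmin_l. apply Rmin_r. }
  assert (Hrr : 0 <= rho / (1 - rho)) by (apply Rlt_le, Rdiv_lt_0_compat; lra).
  pose proof C_pos.
  destruct (inv_kappa_small (rho / (1 - rho) + C) g ltac:(lra) ltac:(lra)) as [M [HM1 HM]].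
  exists M. intros kappa Hk.
  specialize (HM kappa Hk).
  destruct (estimate kappa ltac:(lra)) as [Hr [Hlo Hhi]].
  pose proof (A_pos kappa ltac:(lra)).
  assert (HCk : C / kappa <= (rho / (1 - rho) + C) / kappa).
  { unfold Rdiv. apply Rmult_le_compat_r. left; apply Rinv_0_lt_compat; lra. lra. }
  assert (Hup : r kappa < rho).
  { destruct (Rlt_le_dec (r kappa) rho) as [|Hge]; auto. exfalso.
    pose proof (Fn_mono d beta lambda rho (r kappa) Hb Hl ltac:(lra) ltac:(lra)).
    lra. }
  assert (Hdown : rs - e < r kappa).
  { destruct (Rlt_le_dec (rs - e) (r kappa)) as [|Hle]; auto. exfalso.
    pose proof (Fn_mono d beta lambda (r kappa) (rs - e) Hb Hl ltac:(lra) ltac:(lra)).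
    pose proof (A_small kappa rho ltac:(lra) ltac:(lra) ltac:(lra)).
    assert (rho / (kappa * (1 - rho)) + C / kappa = (rho / (1 - rho) + C) / kappa)
      by (field; lra).
    lra. }
  apply Rabs_def1; lra.
Qed.

Lemma sub_regime : cmu < Zc -> exists rs, 0 < rs < 1 /\ F rs = cmu /\ cv_at_infty r rs.
Proof.
  intro Hsub. destruct (Fn_root d beta lambda zeta cmu Hb Hl HZ Hsub) as [rs [Hrs HF]].
  exists rs. repeat split; try lra. apply sub_cv; auto.
Qed.

Lemma sub_diverges : cmu < Zc -> to_plus_infty (fun kappa => kappa ^ d * (1 - r kappa)).
Proof.
  intro Hsub. destruct (sub_regime Hsub) as [rs [Hrs [_ Hcv]]].
  apply cv_lt1_diverges with rs; auto. lia. lra.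
Qed.

(* At or above the critical value r_kappa -> 1: if r_kappa <= 1 - delta then
   F(r_kappa) + A_kappa <= F(1 - delta) + O(1/kappa) < mu/lambda - C/kappa. *)
Lemma super_cv1 : Zc <= cmu -> cv_at_infty r 1.
Proof.
  intros Hsup eps He.
  set (dl := Rmin (eps / 2) (1 / 2)).
  assert (Hdl : 0 < dl /\ dl <= eps / 2 /\ dl <= 1 / 2).
  { unfold dl. split. apply Rmin_glb_lt; lra. split. apply Rmin_l. apply Rmin_r. }
  set (h := cmu - F (1 - dl)).
  assert (Hh : 0 < h)
    by (pose proof (Fn_lt_zeta d beta lambda zeta (1 - dl) Hb Hl HZ ltac:(lra)); unfold h; lra).
  pose proof C_pos.
  assert (Hidl : 0 < / dl) by (apply Rinv_0_lt_compat; lra).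
  destruct (inv_kappa_small (/ dl + C) h ltac:(lra) Hh) as [M [HM1 HM]].
  exists M. intros kappa Hk. specialize (HM kappa Hk).
  destruct (estimate kappa ltac:(lra)) as [Hr [Hlo Hhi]].
  assert (r kappa > 1 - dl).
  { destruct (Rlt_le_dec (1 - dl) (r kappa)) as [|Hle]; auto. exfalso.
    pose proof (Fn_mono d beta lambda (r kappa) (1 - dl) Hb Hl ltac:(lra) ltac:(lra)).
    pose proof (A_small kappa (1 - dl) ltac:(lra) Hle ltac:(lra)) as HAb.
    assert ((1 - dl) / (kappa * (1 - (1 - dl))) <= / dl / kappa).
    { replace ((1 - dl) / (kappa * (1 - (1 - dl)))) with ((1 - dl) * (/ dl / kappa))
        by (field; lra).
      rewrite <- (Rmult_1_l (/ dl / kappa)) at 2. apply Rmult_le_compat_r.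
      apply Rlt_le, Rdiv_lt_0_compat; lra. lra. }
    assert ((/ dl + C) / kappa = / dl / kappa + C / kappa) by (field; lra).
    unfold h in *. lra. }
  apply Rabs_def1; lra.
Qed.

(* At or above the critical value A_kappa -> mu/lambda - zeta/beta^d, because
   F(r_kappa) -> zeta/beta^d as r_kappa -> 1. *)
Lemma super_A_limit : Zc <= cmu -> cv_at_infty A (cmu - Zc).
Proof.
  intros Hsup eps He.
  destruct (Fn_near1 d beta lambda zeta Hb Hl HZ (eps / 2) ltac:(lra)) as [dl [Hdl Hnear]].
  destruct (super_cv1 Hsup dl ltac:(lra)) as [M1 HM1].
  pose proof C_pos.
  destruct (inv_kappa_small C (eps / 2) ltac:(lra) ltac:(lra)) as [M2 [HM2 HC]].
  exists (Rmax M1 M2). intros kappa Hk.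
  pose proof (Rmax_l M1 M2). pose proof (Rmax_r M1 M2).
  specialize (HM1 kappa ltac:(lra)). apply Rabs_def2 in HM1.
  specialize (HC kappa ltac:(lra)).
  destruct (estimate kappa ltac:(lra)) as [Hr [Hlo Hhi]].
  specialize (Hnear (r kappa) ltac:(lra)).
  pose proof (Fn_lt_zeta d beta lambda zeta (r kappa) Hb Hl HZ Hr).
  apply Rabs_def1; lra.
Qed.

Lemma gap_as_ratio kappa : 1 <= kappa -> kappa ^ d * (1 - r kappa) = r kappa / A kappa.
Proof.
  intro Hk. destruct (estimate kappa Hk) as [Hr _]. pose proof (pow_lt kappa d ltac:(lra)).
  unfold Akappa. field. split; nra.
Qed.

Lemma sup_limit : Zc < cmu ->
  cv_at_infty (fun kappa => kappa ^ d * (1 - r kappa)) (/ (cmu - Zc)).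
Proof.
  intro Hsup. apply cv_at_infty_ext with (fun kappa => r kappa / A kappa) 1.
  - intros kappa Hk. symmetry. apply gap_as_ratio; auto.
  - apply cv_div_limit. apply super_cv1; lra. apply super_A_limit; lra. lra.
Qed.

(* Critical regime: A_kappa -> 0+, so kappa^d (1 - r_kappa) -> +infinity. *)
Lemma crit_diverges : Zc = cmu -> to_plus_infty (fun kappa => kappa ^ d * (1 - r kappa)).
Proof.
  intro Hcrit. apply to_plus_infty_ext with (fun kappa => r kappa / A kappa) 1.
  - intros kappa Hk. symmetry. apply gap_as_ratio; auto.
  - apply cv_div_infty with 1. apply super_cv1; lra.
    replace 0 with (cmu - Zc) by lra. apply super_A_limit; lra.
    apply A_pos.
Qed.

Lemma part_a_iff : (exists rs, 0 < rs < 1 /\ cv_at_infty r rs) <-> cmu < Zc.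
Proof.
  split.
  - intros [rs [Hrs Hcv]]. destruct (Rlt_le_dec cmu Zc) as [|Hsup]; auto.
    pose proof (cv_unique _ _ _ Hcv (super_cv1 Hsup)). lra.
  - intro Hsub. destruct (sub_regime Hsub) as [rs [Hrs [_ Hcv]]]. eauto.
Qed.

Lemma part_a_limit rs : 0 < rs < 1 -> cv_at_infty r rs ->
  LimitEq d beta lambda mu rs /\
  (forall t, 0 < t < 1 -> LimitEq d beta lambda mu t -> t = rs).
Proof.
  intros Hrs Hcv.
  assert (Hsub : cmu < Zc) by (apply part_a_iff; eauto).
  destruct (sub_regime Hsub) as [rs' [Hrs' [HF Hcv']]].
  pose proof (cv_unique _ _ _ Hcv Hcv') as <-.
  split.
  - apply LimitEq_iff; auto.
  - intros t Ht HL. apply LimitEq_iff in HL; auto.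
    destruct (Rtotal_order t rs) as [H|[H|H]]; auto; exfalso.
    + pose proof (Fn_strict d beta lambda t rs Hb Hl ltac:(lra) ltac:(lra)). lra.
    + pose proof (Fn_strict d beta lambda rs t Hb Hl ltac:(lra) ltac:(lra)). lra.
Qed.

Lemma part_b :
  cv_at_infty (fun kappa => kappa ^ d * (1 - r kappa)) (/ (cmu - Zc)) <-> Zc < cmu.
Proof.
  split.
  - intro Hcv. destruct (Rtotal_order cmu Zc) as [H|[H|H]]; auto; exfalso.
    + exact (plus_infty_not_cv _ _ (sub_diverges H) Hcv).
    + exact (plus_infty_not_cv _ _ (crit_diverges (eq_sym H)) Hcv).
  - apply sup_limit.
Qed.

Lemma part_c :
  (cv_at_infty r 1 /\ to_plus_infty (fun kappa => kappa ^ d * (1 - r kappa))) <-> cmu = Zc.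
Proof.
  split.
  - intros [Hcv Hinf]. destruct (Rtotal_order cmu Zc) as [H|[H|H]]; auto; exfalso.
    + destruct (sub_regime H) as [rs [Hrs [_ Hcv']]].
      pose proof (cv_unique _ _ _ Hcv Hcv'). lra.
    + exact (plus_infty_not_cv _ _ Hinf (sup_limit H)).
  - intro H. split. apply super_cv1; lra. apply crit_diverges; lra.
Qed.

End Regimes.

Lemma critical_rescale d beta lambda mu zeta : 0 < beta -> 0 < lambda ->
  (beta ^ d * mu < zeta * lambda <-> mu / lambda < zeta / beta ^ d) /\
  (beta ^ d * mu > zeta * lambda <-> zeta / beta ^ d < mu / lambda) /\
  (beta ^ d * mu = zeta * lambda <-> mu / lambda = zeta / beta ^ d) /\
  beta ^ d * lambda / (beta ^ d * mu - zeta * lambda) = / (mu / lambda - zeta / beta ^ d).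
Proof.
  intros Hb Hl.
  assert (HP : 0 < lambda * beta ^ d) by (apply Rmult_lt_0_compat; [|apply pow_lt]; lra).
  assert (E : beta ^ d * mu - zeta * lambda = lambda * beta ^ d * (mu / lambda - zeta / beta ^ d))
    by (field; split; [apply pow_nonzero|]; lra).
  refine (conj _ (conj _ (conj _ _))); try (split; intro; nra).
  rewrite E. unfold Rdiv at 1.
  rewrite (Rinv_mult (lambda * beta ^ d)), <- Rmult_assoc, (Rmult_comm (beta ^ d) lambda),
    Rinv_r by lra.
  ring.
Qed.

Theorem proposition2p1 (d : nat) (beta lambda mu zeta_d : R) (r : R -> R) :
  (2 < d)%nat -> 0 < beta -> 0 < lambda ->
  ZetaVal d zeta_d ->
  IsRkappa d beta lambda mu r ->
  (* (a) *)
  (((exists rs, 0 < rs < 1 /\ cv_at_infty r rs) <-> beta ^ d * mu < zeta_d * lambda) /\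
   (forall rs, 0 < rs < 1 -> cv_at_infty r rs ->
      LimitEq d beta lambda mu rs /\
      (forall t, 0 < t < 1 -> LimitEq d beta lambda mu t -> t = rs))) /\
  (* (b) *)
  (cv_at_infty (fun kappa => kappa ^ d * (1 - r kappa))
      (beta ^ d * lambda / (beta ^ d * mu - zeta_d * lambda))
     <-> beta ^ d * mu > zeta_d * lambda) /\
  (* (c) *)
  ((cv_at_infty r 1 /\ to_plus_infty (fun kappa => kappa ^ d * (1 - r kappa)))
     <-> beta ^ d * mu = zeta_d * lambda).
Proof.
  intros Hd Hb Hl HZ HR.
  assert (Hd3 : (3 <= d)%nat) by lia.
  destruct (critical_rescale d beta lambda mu zeta_d Hb Hl) as [Elt [Egt [Eeq Eval]]].
  rewrite Elt, Egt, Eeq, Eval.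
  split; [split|split].
  - exact (part_a_iff d beta lambda mu zeta_d r Hd3 Hb Hl HZ HR).
  - exact (part_a_limit d beta lambda mu zeta_d r Hd3 Hb Hl HZ HR).
  - exact (part_b d beta lambda mu zeta_d r Hd3 Hb Hl HZ HR).
  - exact (part_c d beta lambda mu zeta_d r Hd3 Hb Hl HZ HR).
Qed.
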